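(* Let $(\mu_n)_{n\ge0}$ be a non-increasing sequence of positive numbers such that $\mu_n=O\left(\frac{1}{n^r}\right)$ for some $r>1$. For each $1\le q<\infty$ there is $p_0>1$ such that $H_\mu(\ell^p_A)\subseteq\ell^q_A$ and $C_\mu(\ell^p_A)\subseteq\ell^q_A$ for each $1<p<p_0$. Moreover, the corresponding restrictions $H_\mu:\ell^p_A\to\ell^q_A$ and $C_\mu:\ell^p_A\to\ell^q_A$ are nuclear if $q=1$ and compact if $q>1$. In particular, $H_\mu:\ell^2_A\to\ell^2_A$ and $C_\mu:\ell^2_A\to\ell^2_A$ are well defined compact operators, and they are nuclear if $r>\frac32$.
   Context: $\ell^p_A$ ($1\le p<\infty$) is the space of $f(z)=\sum_{n\ge0}a_nz^n\in H(\mathbb{D})$ with $\sum_n|a_n|^p<\infty$ (norm $(\sum|a_n|^p)^{1/p}$), and $\ell^\infty_A$ those with $\sup_n|a_n|<\infty$; functions are identified with coefficient sequences. $H_\mu:\ell^\infty_A\to\ell^\infty_A$, $H_\mu((a_n)_{n\ge0})=\left(\sum_{n=0}^\infty\mu_{n+k}a_n\right)_{k\ge0}$ and $C_\mu((a_n)_{n\ge0})=\left(\mu_k\sum_{n=0}^ka_n\right)_{k\ge0}$. An operator $T:X\to Y$ is nuclear if $T=\sum_nx_n^*(\cdot)y_n$ with $x_n^*\in X^*$, $y_n\in Y$, $\sum_n\|x_n^*\|\|y_n\|<\infty$. *)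

From Stdlib Require Import Reals.
From Coquelicot Require Import Coquelicot.
Open Scope R_scope.

(* Sequences of complex coefficients: f(z) = sum a_n z^n identified with (a_n). *)
Definition seqC := nat -> C.

(* x^p for x >= 0 (with 0^p = 0, p > 0). *)
Definition rpow (x p : R) : R := if Rle_dec x 0 then 0 else Rpower x p.

Definition in_lp (p : R) (a : seqC) : Prop :=
  ex_series (fun n => rpow (Cmod (a n)) p).

Definition lp_norm (p : R) (a : seqC) : R :=
  rpow (Series (fun n => rpow (Cmod (a n)) p)) (/ p).

Definition seq_sub (a b : seqC) : seqC := fun n => Cminus (a n) (b n).

(* Hankel-type operator H_mu (a)_k = sum_n mu_{n+k} a_n; mu is real, so the
   complex series is summed componentwise (real and imaginary parts). *)
Definition Hmu (mu : nat -> R) (a : seqC) : seqC :=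
  fun k => (Series (fun n => mu (n + k)%nat * fst (a n)),
            Series (fun n => mu (n + k)%nat * snd (a n))).

Definition Cmu (mu : nat -> R) (a : seqC) : seqC :=
  fun k => Cmult (RtoC (mu k)) (sum_n a k).

Definition bounded_functional (p : R) (phi : seqC -> C) (c : R) : Prop :=
  0 <= c /\
  (forall a b, in_lp p a -> in_lp p b ->
     phi (fun n => Cplus (a n) (b n)) = Cplus (phi a) (phi b)) /\
  (forall (z : C) a, in_lp p a -> phi (fun n => Cmult z (a n)) = Cmult z (phi a)) /\
  (forall a, in_lp p a -> Cmod (phi a) <= c * lp_norm p a).

(* T : l^p_A -> l^q_A is nuclear: T = sum_n x_n^*(.) y_n with
   sum_n ||x_n^*|| ||y_n|| < oo (c n bounds ||x_n^*||), the series converging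
   in l^q_A. *)
Definition nuclear (p q : R) (T : seqC -> seqC) : Prop :=
  exists (x : nat -> seqC -> C) (c : nat -> R) (y : nat -> seqC),
    (forall n, bounded_functional p (x n) (c n)) /\
    (forall n, in_lp q (y n)) /\
    ex_series (fun n => c n * lp_norm q (y n)) /\
    (forall a, in_lp p a ->
       is_lim_seq
         (fun N => lp_norm q (seq_sub (T a)
                     (fun k => sum_n (fun n => Cmult (x n a) (y n k)) N))) 0).

Definition compact_op (p q : R) (T : seqC -> seqC) : Prop :=
  forall (a : nat -> seqC) (M : R),
    (forall j, in_lp p (a j) /\ lp_norm p (a j) <= M) ->
    exists (phi : nat -> nat) (b : seqC),
      (forall j, (phi j < phi (S j))%nat) /\ in_lp q b /\
      is_lim_seq (fun j => lp_norm q (seq_sub (T (a (phi j))) b)) 0.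

(** The operators [H_mu] and [C_mu] are both of the form
    [(T a)_k = sum_n y(n,k) a_n] with a nonnegative kernel [y] whose row sums
    [S_n = sum_k y(n,k) = sum_(j >= n) mu_j] are [O(n^(1-r))].

    For [1 < p < r] the conjugate exponent [p'] satisfies [p'(r-1) > 1], so
    [(S_n)] and the columns of [y] are summable in [l^(p')].  By Hölder and
    Tonelli, [T] maps [l^p] into [l^1] with [||T a||_1 <= 4 ||a||_p ||S||_(p')],
    and [T = sum_k (a |-> (T a)_k) e_k] is a nuclear decomposition because
    [sum_k ||column k||_(p')] is finite.  Compactness follows from a
    diagonal extraction: a bounded sequence has a coordinatewise convergent
    subsequence, and [T] is uniformly small on bounded inputs that are small
    on a finite set of coordinates, because the rows [n > N] of the kernel
    have small norm.  Since [l^1] embeds contractively into [l^q], the case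
    [q > 1] follows.

    On [l^2], the squared row norms [V_n = sum_k y(n,k)^2 = O(n^(1-2r))] are
    summable ([T] is Hilbert–Schmidt), which gives boundedness and
    compactness in the same way, and [T = sum_n (a |-> a_n) (y(n,k))_k] is a
    nuclear decomposition when [sum_n sqrt(V_n)] is finite, i.e. when
    [r > 3/2]. *)

From Stdlib Require Import Reals Lra Lia Psatz Classical FunctionalExtensionality IndefiniteDescription.
From Coquelicot Require Import Coquelicot.
Open Scope R_scope.

Lemma Rpower_gt0 x p : 0 < Rpower x p.
Proof. apply exp_pos. Qed.

Lemma rpow_Rpower x p : 0 < x -> rpow x p = Rpower x p.
Proof. intros H; unfold rpow; destruct (Rle_dec x 0); [lra | auto]. Qed.

Lemma rpow_le0 x p : x <= 0 -> rpow x p = 0.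
Proof. intros H; unfold rpow; destruct (Rle_dec x 0); [auto | lra]. Qed.

Lemma rpow_0 p : rpow 0 p = 0.
Proof. apply rpow_le0; lra. Qed.

Lemma rpow_ge0 x p : 0 <= rpow x p.
Proof. unfold rpow; destruct (Rle_dec x 0); [lra | left; apply Rpower_gt0]. Qed.

Lemma rpow_gt0 x p : 0 < x -> 0 < rpow x p.
Proof. intros H; rewrite rpow_Rpower by auto; apply Rpower_gt0. Qed.

Lemma rpow_1 x : 0 <= x -> rpow x 1 = x.
Proof.
  intros [H | <-]; [rewrite rpow_Rpower by auto; apply Rpower_1; auto | apply rpow_0].
Qed.

Lemma rpow_2 x : 0 <= x -> rpow x 2 = x * x.
Proof.
  intros [H | <-]; [| rewrite rpow_0; ring].
  rewrite rpow_Rpower by auto. replace 2 with (INR 2) by (simpl; ring).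
  rewrite Rpower_pow by auto; simpl; ring.
Qed.

Lemma rpow_le_compat p x y : 0 < p -> 0 <= x <= y -> rpow x p <= rpow y p.
Proof.
  intros Hp [[Hx | <-] Hxy].
  - rewrite !rpow_Rpower by lra. apply Rle_Rpower_l; lra.
  - rewrite rpow_0; apply rpow_ge0.
Qed.

Lemma rpow_lt_compat p x y : 0 < p -> 0 <= x < y -> rpow x p < rpow y p.
Proof.
  intros Hp [[Hx | <-] Hxy].
  - rewrite !rpow_Rpower by lra. apply Rlt_Rpower_l; lra.
  - rewrite rpow_0; apply rpow_gt0; lra.
Qed.

Lemma rpow_le_reg p x y : 0 < p -> 0 <= y -> rpow x p <= rpow y p -> x <= y.
Proof.
  intros Hp Hy H. destruct (Rle_lt_dec x y) as [| Hlt]; auto.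
  pose proof (rpow_lt_compat p y x Hp (conj Hy Hlt)); lra.
Qed.

Lemma rpow_mult_distr x y p : 0 <= x -> 0 <= y -> rpow (x * y) p = rpow x p * rpow y p.
Proof.
  intros [Hx | <-] [Hy | <-]; rewrite ?Rmult_0_l, ?Rmult_0_r, ?rpow_0; try ring.
  rewrite !rpow_Rpower by nra. rewrite Rpower_mult_distr; auto.
Qed.

Lemma rpow_rpow x p t : 0 <= x -> rpow (rpow x p) t = rpow x (p * t).
Proof.
  intros [Hx | <-]; [| rewrite !rpow_0; auto].
  rewrite (rpow_Rpower x), !rpow_Rpower by auto using Rpower_gt0. apply Rpower_mult.
Qed.

Lemma rpow_rpow_inv x p : 0 <= x -> p <> 0 -> rpow (rpow x p) (/ p) = x.
Proof. intros Hx Hp. rewrite rpow_rpow, Rinv_r by auto. apply rpow_1; auto. Qed.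

Lemma rpow_inv_rpow x p : 0 <= x -> p <> 0 -> rpow (rpow x (/ p)) p = x.
Proof. intros Hx Hp. rewrite rpow_rpow, Rinv_l by auto. apply rpow_1; auto. Qed.

Lemma rpow_plus x a b : 0 < x -> rpow x (a + b) = rpow x a * rpow x b.
Proof. intros H; rewrite !rpow_Rpower by auto; apply Rpower_plus. Qed.

Lemma rpow_div x y p : 0 <= x -> 0 < y -> rpow (x / y) p = rpow x p / rpow y p.
Proof.
  intros Hx Hy. unfold Rdiv.
  assert (Hy' : 0 < / y) by (apply Rinv_0_lt_compat; auto).
  rewrite rpow_mult_distr, (rpow_Rpower (/ y)), (rpow_Rpower y) by lra.
  unfold Rpower. rewrite ln_Rinv, <- exp_Ropp by auto. f_equal; f_equal; ring.
Qed.

Lemma rpow_inv_le q s eta : 0 < q -> 0 <= eta -> s <= rpow eta q -> rpow s (/ q) <= eta.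
Proof.
  intros Hq He H. destruct (Rle_lt_dec s 0). { rewrite rpow_le0; auto. }
  rewrite <- (rpow_rpow_inv eta q) by (auto; lra).
  apply rpow_le_compat; [apply Rinv_0_lt_compat |]; lra.
Qed.

Lemma rpow_le_self x p : 0 <= x <= 1 -> 1 <= p -> rpow x p <= x.
Proof.
  intros [[Hx | <-] Hx1] Hp; [| rewrite rpow_0; lra].
  rewrite rpow_Rpower by auto. replace p with (1 + (p - 1)) by ring.
  rewrite Rpower_plus, Rpower_1 by auto.
  assert (Hln : ln x <= 0).
  { destruct Hx1 as [Hx1 | ->]; [left; rewrite <- ln_1; apply ln_increasing; auto | rewrite ln_1; lra]. }
  assert (Rpower x (p - 1) <= 1).
  { unfold Rpower. apply Rle_trans with (exp 0); [| rewrite exp_0; lra].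
    assert (Hneg : (p - 1) * ln x <= 0) by nra.
    destruct Hneg as [Hlt | Heq]; [left; apply exp_increasing, Hlt | rewrite Heq; lra]. }
  pose proof (Rpower_gt0 x (p - 1)). nra.
Qed.

Lemma sum_n_succ (u : nat -> R) n : sum_n u (S n) = sum_n u n + u (S n).
Proof. rewrite sum_Sn; reflexivity. Qed.

Lemma is_series_of_lim (u : nat -> R) (l : R) : is_lim_seq (sum_n u) l -> is_series u l.
Proof. exact (fun H => H). Qed.

Lemma ex_series_Rmult_l (c : R) (u : nat -> R) : ex_series u -> ex_series (fun n => c * u n).
Proof. exact (ex_series_scal_l c u). Qed.

Lemma ex_series_Rplus (u v : nat -> R) :
  ex_series u -> ex_series v -> ex_series (fun n => u n + v n).
Proof. exact (ex_series_plus u v). Qed.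

Lemma sum_n_Rmult_l (c : R) (u : nat -> R) N : sum_n (fun n => c * u n) N = c * sum_n u N.
Proof. induction N; [rewrite !sum_O; auto | rewrite !sum_n_succ, IHN, Rmult_plus_distr_l; reflexivity]. Qed.

Lemma sum_n_nonneg (u : nat -> R) N : (forall n, 0 <= u n) -> 0 <= sum_n u N.
Proof.
  intros H; induction N; [rewrite sum_O; auto | rewrite sum_n_succ; specialize (H (S N)); lra].
Qed.

Lemma sum_n_le (u v : nat -> R) N :
  (forall n, (n <= N)%nat -> u n <= v n) -> sum_n u N <= sum_n v N.
Proof.
  intros H; induction N; [rewrite !sum_O; apply H; lia |].
  rewrite !sum_n_succ. assert (u (S N) <= v (S N)) by (apply H; lia).
  assert (sum_n u N <= sum_n v N) by (apply IHN; intros; apply H; lia). lra.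
Qed.

Lemma sum_n_ge_term (u : nat -> R) N n :
  (forall k, 0 <= u k) -> (n <= N)%nat -> u n <= sum_n u N.
Proof.
  intros H Hn. induction N.
  - replace n with 0%nat by lia; rewrite sum_O; lra.
  - rewrite sum_n_succ. destruct (Nat.eq_dec n (S N)) as [-> |].
    + pose proof (sum_n_nonneg u N H); lra.
    + assert (u n <= sum_n u N) by (apply IHN; lia). specialize (H (S N)); lra.
Qed.

Lemma ex_series_bounded (u : nat -> R) B :
  (forall n, 0 <= u n) -> (forall N, sum_n u N <= B) -> ex_series u /\ Series u <= B.
Proof.
  intros H0 HB.
  destruct (ex_finite_lim_seq_incr (sum_n u) B) as [l Hl]; auto.
  { intro n; rewrite sum_n_succ; specialize (H0 (S n)); lra. }
  split; [exists l; exact Hl |]. rewrite (is_series_unique u l Hl).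
  assert (Rbar_le l B) by (apply (is_lim_seq_le (sum_n u) (fun _ => B)); auto; apply is_lim_seq_const).
  exact H.
Qed.

Lemma sum_n_le_Series (u : nat -> R) N :
  (forall n, 0 <= u n) -> ex_series u -> sum_n u N <= Series u.
Proof.
  intros H0 [l Hl]. rewrite (is_series_unique _ _ Hl).
  apply (is_lim_seq_incr_compare (sum_n u) l Hl).
  intro n; rewrite sum_n_succ; specialize (H0 (S n)); lra.
Qed.

Lemma term_le_Series (u : nat -> R) n : (forall k, 0 <= u k) -> ex_series u -> u n <= Series u.
Proof.
  intros H0 H. apply Rle_trans with (sum_n u n); [apply sum_n_ge_term | apply sum_n_le_Series]; auto.
Qed.

Lemma Series_nonneg (u : nat -> R) : (forall k, 0 <= u k) -> ex_series u -> 0 <= Series u.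
Proof. intros H0 H. apply Rle_trans with (u 0%nat); [apply H0 | apply term_le_Series; auto]. Qed.

Lemma ex_series_le_nonneg (u v : nat -> R) :
  (forall n, 0 <= u n <= v n) -> ex_series v -> ex_series u.
Proof.
  intros H Hv. apply (ex_series_le u v); auto.
  intro n. change (Rabs (u n) <= v n). rewrite Rabs_right; [apply H | apply Rle_ge, H].
Qed.

Lemma ex_series_Series_le (u v : nat -> R) :
  (forall n, 0 <= u n <= v n) -> ex_series v -> ex_series u /\ Series u <= Series v.
Proof. intros H Hv; split; [eapply ex_series_le_nonneg | apply Series_le]; eauto. Qed.

Definition seq_head (N : nat) (u : nat -> R) : nat -> R :=
  fun k => if Nat.leb k N then u k else 0.

Definition seq_tail (N : nat) (u : nat -> R) : nat -> R :=
  fun k => if Nat.leb k N then 0 else u k.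

Lemma seq_tail_le (u : nat -> R) N n : (forall k, 0 <= u k) -> 0 <= seq_tail N u n <= u n.
Proof. intros H; unfold seq_tail; specialize (H n); destruct (Nat.leb n N); lra. Qed.

Lemma is_series_seq_head (u : nat -> R) N : is_series (seq_head N u) (sum_n u N).
Proof.
  apply is_series_of_lim, is_lim_seq_ext_loc with (fun _ => sum_n u N); [| apply is_lim_seq_const].
  exists N. intros M HM. induction HM.
  - apply sum_n_ext_loc. intros n Hn. unfold seq_head. apply Nat.leb_le in Hn. rewrite Hn; auto.
  - rewrite sum_n_succ, <- IHHM. unfold seq_head.
    replace (Nat.leb (S m) N) with false by (symmetry; apply Nat.leb_gt; lia). symmetry; apply Rplus_0_r.
Qed.

Lemma ex_series_seq_head (u : nat -> R) N : ex_series (seq_head N u).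
Proof. eexists; apply is_series_seq_head. Qed.

Lemma Series_seq_head (u : nat -> R) N : Series (seq_head N u) = sum_n u N.
Proof. apply is_series_unique, is_series_seq_head. Qed.

Lemma sum_n_seq_tail (u : nat -> R) N M :
  sum_n (seq_tail N u) M = sum_n u M - sum_n u (Nat.min M N).
Proof.
  induction M.
  - rewrite !sum_O. unfold seq_tail. simpl. ring.
  - rewrite !sum_n_succ, IHM. unfold seq_tail. destruct (Nat.leb (S M) N) eqn:E.
    + apply Nat.leb_le in E. rewrite !Nat.min_l by lia. rewrite sum_n_succ; lra.
    + apply Nat.leb_gt in E. rewrite !Nat.min_r by lia. lra.
Qed.

Lemma is_series_seq_tail (u : nat -> R) l N :
  is_series u l -> is_series (seq_tail N u) (l - sum_n u N).
Proof.
  intros H. apply is_series_of_lim, is_lim_seq_ext_loc with (fun M => sum_n u M - sum_n u N).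
  - exists N. intros M HM. rewrite sum_n_seq_tail, Nat.min_r; auto.
  - apply (is_lim_seq_minus' _ _ l (sum_n u N)); [exact H | apply is_lim_seq_const].
Qed.

Lemma ex_series_seq_tail (u : nat -> R) N : ex_series u -> ex_series (seq_tail N u).
Proof. intros [l H]; eexists; apply is_series_seq_tail; eauto. Qed.

Lemma Series_seq_tail (u : nat -> R) N :
  ex_series u -> Series (seq_tail N u) = Series u - sum_n u N.
Proof.
  intros [l H]. rewrite (is_series_unique _ _ H). apply is_series_unique, is_series_seq_tail; auto.
Qed.

Lemma Series_seq_tail_lim0 (u : nat -> R) :
  ex_series u -> is_lim_seq (fun N => Series (seq_tail N u)) 0.
Proof.
  intros Hu. apply is_lim_seq_ext with (fun N => Series u - sum_n u N).
  { intro N; rewrite Series_seq_tail; auto. }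
  replace (Finite 0) with (Rbar_minus (Series u) (Series u)) by (simpl; f_equal; ring).
  apply is_lim_seq_minus'; [apply is_lim_seq_const | apply Series_correct, Hu].
Qed.

Lemma is_series_zero_prefix (u : nat -> R) n l :
  is_series (fun k => u (n + k)%nat) l -> is_series (fun k => if Nat.leb n k then u k else 0) l.
Proof.
  intros H. destruct n.
  - eapply is_series_ext; [| exact H]. intro k; simpl; auto.
  - apply is_series_decr_n with (S n); [lia |].
    rewrite (sum_n_ext_loc _ (fun _ => 0)).
    + rewrite sum_n_const.
      match goal with |- is_series _ ?L => replace L with l end.
      * eapply is_series_ext; [| exact H]. intro k.
        replace (Nat.leb (S n) (S n + k)) with true by (symmetry; apply Nat.leb_le; lia). auto.
      * change (l = l + - (INR (S (pred (S n))) * 0)).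
        rewrite Rmult_0_r, Ropp_0, Rplus_0_r. reflexivity.
    + intros m Hm. replace (Nat.leb (S n) m) with false by (symmetry; apply Nat.leb_gt; lia). auto.
Qed.

Lemma eventually_forall_le (P : nat -> nat -> Prop) N :
  (forall n, (n <= N)%nat -> exists J, forall j, (J <= j)%nat -> P n j) ->
  exists J, forall j, (J <= j)%nat -> forall n, (n <= N)%nat -> P n j.
Proof.
  induction N; intros H.
  - destruct (H 0%nat) as [J HJ]; auto.
    exists J; intros j Hj n Hn. replace n with 0%nat by lia; auto.
  - destruct IHN as [J1 H1]; [intros; apply H; lia |].
    destruct (H (S N)) as [J2 H2]; auto.
    exists (Nat.max J1 J2). intros j Hj n Hn. destruct (Nat.eq_dec n (S N)) as [-> |].
    + apply H2; lia.
    + apply H1; lia.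
Qed.

(** * Hölder's inequality *)

Definition Lp (p : R) (u : nat -> R) : R := rpow (Series (fun n => rpow (u n) p)) (/ p).

Definition conj_exp (p : R) : R := p / (p - 1).

Lemma Lp_ge0 p u : 0 <= Lp p u.
Proof. apply rpow_ge0. Qed.

Lemma rpow_Lp p u : 0 < p -> ex_series (fun n => rpow (u n) p) ->
  rpow (Lp p u) p = Series (fun n => rpow (u n) p).
Proof.
  intros Hp H. apply rpow_inv_rpow; [| lra]. apply Series_nonneg; auto. intros; apply rpow_ge0.
Qed.

Lemma le_Lp p u n : 0 < p -> 0 <= u n -> ex_series (fun n => rpow (u n) p) -> u n <= Lp p u.
Proof.
  intros Hp H0 H. apply (rpow_le_reg p); auto using Lp_ge0.
  rewrite rpow_Lp by auto. apply (term_le_Series (fun n => rpow (u n) p)); auto using rpow_ge0.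
Qed.

Lemma Lp_le p u M : 0 < p -> 0 <= M -> Series (fun n => rpow (u n) p) <= rpow M p -> Lp p u <= M.
Proof. apply rpow_inv_le. Qed.

Lemma conj_exp_gt1 p : 1 < p -> 1 < conj_exp p.
Proof.
  intros H. unfold conj_exp. apply Rmult_lt_reg_r with (p - 1); [lra |].
  unfold Rdiv. rewrite Rmult_assoc, Rinv_l by lra. lra.
Qed.

(** Young's inequality without the weights [1/p] and [1/p']: compare [y] with [x^(p-1)]. *)
Lemma young p x y : 1 < p -> 0 <= x -> 0 <= y -> x * y <= rpow x p + rpow y (conj_exp p).
Proof.
  intros Hp Hx0 Hy0. pose proof (rpow_ge0 x p). pose proof (rpow_ge0 y (conj_exp p)).
  destruct Hx0 as [Hx | <-]; [| lra]. destruct Hy0 as [Hy | <-]; [| lra].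
  destruct (Rle_lt_dec y (rpow x (p - 1))).
  - assert (Hxy : x * y <= x * rpow x (p - 1)) by (apply Rmult_le_compat_l; lra).
    replace (x * rpow x (p - 1)) with (rpow x p) in Hxy; [lra |].
    rewrite <- (rpow_1 x) at 2 by lra. rewrite <- rpow_plus by auto. f_equal; ring.
  - assert (x < rpow y (/ (p - 1))).
    { rewrite <- (rpow_rpow_inv x (p - 1)) by lra.
      apply rpow_lt_compat; [apply Rinv_0_lt_compat; lra | split; auto using rpow_ge0]. }
    assert (Hxy : x * y <= rpow y (/ (p - 1)) * y) by (apply Rmult_le_compat_r; lra).
    replace (rpow y (/ (p - 1)) * y) with (rpow y (conj_exp p)) in Hxy; [lra |].
    rewrite <- (rpow_1 y) at 3 by lra. rewrite <- rpow_plus by auto.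
    f_equal. unfold conj_exp. field. lra.
Qed.

Lemma ex_series_Series_le_0 (u : nat -> R) : (forall n, u n = 0) -> ex_series u /\ Series u <= 0.
Proof.
  intros H. apply ex_series_bounded; [intros; rewrite H; lra |].
  intros N. rewrite (sum_n_ext _ (fun _ => 0)) by auto. rewrite sum_n_const. lra.
Qed.

(** The factor [2] is the price of using Young's inequality without weights. *)
Lemma holder p (u w : nat -> R) : 1 < p -> (forall n, 0 <= u n) -> (forall n, 0 <= w n) ->
  ex_series (fun n => rpow (u n) p) -> ex_series (fun n => rpow (w n) (conj_exp p)) ->
  ex_series (fun n => u n * w n) /\
  Series (fun n => u n * w n) <= 2 * Lp p u * Lp (conj_exp p) w.
Proof.
  intros Hp Hu Hw Su Sw. set (e := conj_exp p) in *.
  assert (He : 1 < e) by (apply conj_exp_gt1; auto).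
  set (l := Lp p u). set (v := Lp e w).
  assert (ul : forall n, u n <= l) by (intros; apply le_Lp; auto; lra).
  assert (wv : forall n, w n <= v) by (intros; apply le_Lp; auto; lra).
  destruct (Lp_ge0 p u) as [Hl | Hl]; fold l in Hl.
  2:{ destruct (ex_series_Series_le_0 (fun n => u n * w n)) as [A B].
      { intro n; specialize (ul n); specialize (Hu n). replace (u n) with 0 by lra; ring. }
      split; auto. rewrite <- Hl. lra. }
  destruct (Lp_ge0 e w) as [Hv | Hv]; fold v in Hv.
  2:{ destruct (ex_series_Series_le_0 (fun n => u n * w n)) as [A B].
      { intro n; specialize (wv n); specialize (Hw n). replace (w n) with 0 by lra; ring. }
      split; auto. rewrite <- Hv. lra. }
  assert (Pl : rpow l p = Series (fun n => rpow (u n) p)) by (apply rpow_Lp; auto; lra).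
  assert (Pv : rpow v e = Series (fun n => rpow (w n) e)) by (apply rpow_Lp; auto; lra).
  assert (Pl0 : 0 < rpow l p) by (apply rpow_gt0; auto).
  assert (Pv0 : 0 < rpow v e) by (apply rpow_gt0; auto).
  set (b := fun n => (l * v / rpow l p) * rpow (u n) p + (l * v / rpow v e) * rpow (w n) e).
  assert (Eb : ex_series b) by (apply ex_series_Rplus; apply ex_series_Rmult_l; auto).
  assert (Sb : Series b = 2 * l * v).
  { unfold b. rewrite Series_plus, !Series_scal_l, <- Pl, <- Pv by (apply ex_series_Rmult_l; auto).
    field. lra. }
  assert (Hb : forall n, 0 <= u n * w n <= b n).
  { intro n. split; [apply Rmult_le_pos; auto |].
    pose proof (young p (u n / l) (w n / v) Hp) as Y. rewrite !rpow_div in Y by auto.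
    replace (u n * w n) with (l * v * ((u n / l) * (w n / v))) by (field; lra).
    replace (b n) with (l * v * (rpow (u n) p / rpow l p + rpow (w n) e / rpow v e))
      by (unfold b; field; lra).
    apply Rmult_le_compat_l; [nra |]. apply Y; apply Rdiv_le_0_compat; auto. }
  destruct (ex_series_Series_le _ _ Hb Eb) as [A B]. split; auto. lra.
Qed.

Lemma lp_norm_Lp p a : lp_norm p a = Lp p (fun n => Cmod (a n)).
Proof. reflexivity. Qed.

Lemma lp_norm_ge0 p a : 0 <= lp_norm p a.
Proof. apply rpow_ge0. Qed.

Lemma Cmod_le_lp_norm p a n : 0 < p -> in_lp p a -> Cmod (a n) <= lp_norm p a.
Proof. intros Hp H. apply (le_Lp p (fun n => Cmod (a n))); auto using Cmod_ge_0. Qed.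

Lemma Series_rpow_le_lp_norm p a M : 0 < p -> in_lp p a -> lp_norm p a <= M ->
  Series (fun n => rpow (Cmod (a n)) p) <= rpow M p.
Proof.
  intros Hp H HM. rewrite <- (rpow_Lp p (fun n => Cmod (a n))) by auto.
  apply rpow_le_compat; auto. split; [apply Lp_ge0 | auto].
Qed.

(** * Operators with a nonnegative kernel *)

Lemma im_le_Cmod (c : C) : Rabs (snd c) <= Cmod c.
Proof.
  destruct c as [x y]. pose proof (re_le_Cmod (y, x)). unfold Cmod in *. simpl in *.
  rewrite Rplus_comm; auto.
Qed.

Lemma Cmod_le_Rabs_plus (c : C) : Cmod c <= Rabs (fst c) + Rabs (snd c).
Proof.
  destruct c as [x y]. unfold Cmod; cbn [fst snd].
  pose proof (Rabs_pos x); pose proof (Rabs_pos y).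
  rewrite <- (sqrt_pow2 (Rabs x + Rabs y)) by lra.
  apply sqrt_le_1_alt. rewrite <- (pow2_abs x), <- (pow2_abs y). nra.
Qed.

Definition kernel_op (y : nat -> nat -> R) (a : seqC) : seqC :=
  fun k => (Series (fun n => y n k * fst (a n)), Series (fun n => y n k * snd (a n))).

Section KernelColumn.

Variables (y : nat -> nat -> R) (k : nat).
Hypothesis col_ge0 : forall n, 0 <= y n k.

Let abs_term_le (a : seqC) (f : C -> R) : (forall c, Rabs (f c) <= Cmod c) ->
  forall n, 0 <= Rabs (y n k * f (a n)) <= y n k * Cmod (a n).
Proof.
  intros Hf n. split; [apply Rabs_pos |].
  rewrite Rabs_mult, Rabs_pos_eq by auto. apply Rmult_le_compat_l; auto.
Qed.

Lemma kernel_op_Cmod_le (a : seqC) : ex_series (fun n => y n k * Cmod (a n)) ->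
  ex_series (fun n => y n k * fst (a n)) /\ ex_series (fun n => y n k * snd (a n)) /\
  Cmod (kernel_op y a k) <= 2 * Series (fun n => y n k * Cmod (a n)).
Proof.
  intros H.
  destruct (ex_series_Series_le _ _ (abs_term_le a fst re_le_Cmod) H) as [E1 S1].
  destruct (ex_series_Series_le _ _ (abs_term_le a snd im_le_Cmod) H) as [E2 S2].
  split; [apply ex_series_Rabs; auto |]. split; [apply ex_series_Rabs; auto |].
  eapply Rle_trans; [apply Cmod_le_Rabs_plus |]. unfold kernel_op; cbn [fst snd].
  pose proof (Series_Rabs _ E1). pose proof (Series_Rabs _ E2). lra.
Qed.

Variables a b : seqC.
Hypothesis a_summable : ex_series (fun n => y n k * Cmod (a n)).
Hypothesis b_summable : ex_series (fun n => y n k * Cmod (b n)).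

Lemma kernel_op_minus : kernel_op y (seq_sub a b) k = Cminus (kernel_op y a k) (kernel_op y b k).
Proof.
  destruct (kernel_op_Cmod_le a a_summable) as [A1 [A2 _]].
  destruct (kernel_op_Cmod_le b b_summable) as [B1 [B2 _]].
  unfold kernel_op, seq_sub, Cminus, Cplus, Copp; simpl.
  f_equal; rewrite <- Rminus_def, <- Series_minus by auto; apply Series_ext; intro; simpl; ring.
Qed.

Lemma kernel_op_plus :
  kernel_op y (fun n => Cplus (a n) (b n)) k = Cplus (kernel_op y a k) (kernel_op y b k).
Proof.
  destruct (kernel_op_Cmod_le a a_summable) as [A1 [A2 _]].
  destruct (kernel_op_Cmod_le b b_summable) as [B1 [B2 _]].
  unfold kernel_op, Cplus; simpl.
  f_equal; rewrite <- Series_plus by auto; apply Series_ext; intro; simpl; ring.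
Qed.

Lemma kernel_op_scal (z : C) : kernel_op y (fun n => Cmult z (a n)) k = Cmult z (kernel_op y a k).
Proof.
  destruct (kernel_op_Cmod_le a a_summable) as [A1 [A2 _]].
  unfold kernel_op, Cmult; simpl. rewrite <- !Series_scal_l.
  f_equal; [rewrite <- Series_minus | rewrite <- Series_plus];
    try apply ex_series_Rmult_l; auto; apply Series_ext; intro; simpl; ring.
Qed.

End KernelColumn.

Definition rows_upto (N : nat) (y : nat -> nat -> R) : nat -> nat -> R :=
  fun n k => if Nat.leb n N then y n k else 0.

Definition rows_after (N : nat) (y : nat -> nat -> R) : nat -> nat -> R :=
  fun n k => if Nat.leb n N then 0 else y n k.

Lemma rows_upto_ge0 y N : (forall n k, 0 <= y n k) -> forall n k, 0 <= rows_upto N y n k.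
Proof. intros H n k; unfold rows_upto; destruct (Nat.leb n N); auto; lra. Qed.

Lemma rows_after_ge0 y N : (forall n k, 0 <= y n k) -> forall n k, 0 <= rows_after N y n k.
Proof. intros H n k; unfold rows_after; destruct (Nat.leb n N); auto; lra. Qed.

Lemma kernel_op_rows_split y N d k : (forall n k, 0 <= y n k) ->
  ex_series (fun n => y n k * Cmod (d n)) ->
  kernel_op y d k = Cplus (kernel_op (rows_upto N y) d k) (kernel_op (rows_after N y) d k).
Proof.
  intros H0 H.
  assert (G : forall n, 0 <= y n k * Cmod (d n)) by (intro n; apply Rmult_le_pos; auto using Cmod_ge_0).
  assert (Hlo : ex_series (fun n => rows_upto N y n k * Cmod (d n))).
  { apply ex_series_le_nonneg with (fun n => y n k * Cmod (d n)); auto.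
    intro n; unfold rows_upto; specialize (G n); destruct (Nat.leb n N); lra. }
  assert (Hhi : ex_series (fun n => rows_after N y n k * Cmod (d n))).
  { apply ex_series_le_nonneg with (fun n => y n k * Cmod (d n)); auto.
    intro n; unfold rows_after; specialize (G n); destruct (Nat.leb n N); lra. }
  destruct (kernel_op_Cmod_le _ k (fun n => rows_upto_ge0 y N H0 n k) d Hlo) as [A1 [A2 _]].
  destruct (kernel_op_Cmod_le _ k (fun n => rows_after_ge0 y N H0 n k) d Hhi) as [B1 [B2 _]].
  unfold kernel_op, Cplus; simpl.
  f_equal; rewrite <- Series_plus by auto; apply Series_ext; intro n;
    unfold rows_upto, rows_after; destruct (Nat.leb n N); ring.
Qed.

Lemma sum_n_Series_comm (g : nat -> nat -> R) K : (forall k, ex_series (fun n => g n k)) ->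
  ex_series (fun n => sum_n (g n) K) /\
  sum_n (fun k => Series (fun n => g n k)) K = Series (fun n => sum_n (g n) K).
Proof.
  intros H. induction K as [| K [E1 E2]].
  - rewrite sum_O. split.
    + eapply ex_series_ext; [| apply (H 0%nat)]. intro n; rewrite sum_O; auto.
    + apply Series_ext; intro n; rewrite sum_O; auto.
  - split.
    + eapply ex_series_ext; [| apply (ex_series_Rplus _ _ E1 (H (S K)))].
      intro n; rewrite sum_n_succ; auto.
    + rewrite sum_n_succ, E2, <- Series_plus by auto.
      apply Series_ext; intro n; rewrite sum_n_succ; auto.
Qed.

Lemma tonelli (f : nat -> nat -> R) (F : nat -> R) : (forall n k, 0 <= f n k) ->
  (forall n, is_series (f n) (F n)) -> ex_series F ->
  ex_series (fun k => Series (fun n => f n k)) /\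
  Series (fun k => Series (fun n => f n k)) <= Series F.
Proof.
  intros H0 HF EF.
  assert (SF : forall n, Series (f n) = F n) by (intro n; apply is_series_unique; auto).
  assert (EFn : forall n, ex_series (f n)) by (intro n; exists (F n); auto).
  assert (Ek : forall k, ex_series (fun n => f n k)).
  { intro k. apply ex_series_le_nonneg with F; auto.
    intro n. split; auto. rewrite <- SF. apply term_le_Series; auto. }
  apply ex_series_bounded.
  - intro k; apply Series_nonneg; auto.
  - intro K. destruct (sum_n_Series_comm f K Ek) as [E1 ->].
    apply Series_le; auto. intro n; split; [apply sum_n_nonneg; auto |].
    rewrite <- SF. apply sum_n_le_Series; auto.
Qed.

Lemma in_lp_1 b : in_lp 1 b <-> ex_series (fun k => Cmod (b k)).
Proof. unfold in_lp; split; apply ex_series_ext; intro n; rewrite rpow_1; auto using Cmod_ge_0. Qed.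

Lemma lp_norm_1 b : in_lp 1 b -> lp_norm 1 b = Series (fun k => Cmod (b k)).
Proof.
  intros H. unfold lp_norm. rewrite Rinv_1.
  rewrite (Series_ext _ (fun k => Cmod (b k))) by (intro; apply rpow_1, Cmod_ge_0).
  apply rpow_1, Series_nonneg; [intro; apply Cmod_ge_0 | apply in_lp_1; auto].
Qed.

Lemma le_row_sum (y : nat -> nat -> R) (S : nat -> R) n k :
  (forall n k, 0 <= y n k) -> (forall n, is_series (y n) (S n)) -> y n k <= S n.
Proof.
  intros H0 HS. rewrite <- (is_series_unique _ _ (HS n)). apply term_le_Series; auto.
  exists (S n); auto.
Qed.

Lemma kernel_op_l1 (y : nat -> nat -> R) (S : nat -> R) (a : seqC) :
  (forall n k, 0 <= y n k) -> (forall n, is_series (y n) (S n)) ->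
  ex_series (fun n => Cmod (a n) * S n) ->
  (forall k, ex_series (fun n => y n k * Cmod (a n))) /\ in_lp 1 (kernel_op y a) /\
  Series (fun k => Cmod (kernel_op y a k)) <= 2 * Series (fun n => Cmod (a n) * S n).
Proof.
  intros H0 HS Ha.
  assert (Ek : forall k, ex_series (fun n => y n k * Cmod (a n))).
  { intro k. apply ex_series_le_nonneg with (fun n => Cmod (a n) * S n); auto.
    intro n. pose proof (Cmod_ge_0 (a n)). pose proof (le_row_sum y S n k H0 HS).
    split; [apply Rmult_le_pos; auto | rewrite Rmult_comm; apply Rmult_le_compat_l; auto]. }
  destruct (tonelli (fun n k => Cmod (a n) * y n k) (fun n => Cmod (a n) * S n)) as [T1 T2]; auto.
  { intros; apply Rmult_le_pos; auto using Cmod_ge_0. }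
  { intro n. exact (is_series_scal_l (Cmod (a n)) (y n) (S n) (HS n)). }
  assert (Bk : forall k, 0 <= Cmod (kernel_op y a k) <= 2 * Series (fun n => Cmod (a n) * y n k)).
  { intro k. split; [apply Cmod_ge_0 |].
    destruct (kernel_op_Cmod_le y k (fun n => H0 n k) a (Ek k)) as [_ [_ B]].
    rewrite (Series_ext _ (fun n => y n k * Cmod (a n))) by (intro; ring); auto. }
  destruct (ex_series_Series_le _ _ Bk (ex_series_Rmult_l 2 _ T1)) as [EC SC].
  split; [| split]; auto.
  - apply in_lp_1; auto.
  - rewrite Series_scal_l in SC. lra.
Qed.

Lemma kernel_op_l2 (y : nat -> nat -> R) (V : nat -> R) (a : seqC) :
  (forall n k, 0 <= y n k) -> (forall n, is_series (fun k => rpow (y n k) 2) (V n)) ->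
  ex_series V -> in_lp 2 a ->
  (forall k, ex_series (fun n => y n k * Cmod (a n))) /\ in_lp 2 (kernel_op y a) /\
  Series (fun k => rpow (Cmod (kernel_op y a k)) 2)
    <= 16 * Series (fun n => rpow (Cmod (a n)) 2) * Series V.
Proof.
  intros H0 HV EV Ha.
  assert (H2 : conj_exp 2 = 2) by (unfold conj_exp; field).
  assert (Erow : forall k, ex_series (fun n => rpow (y n k) 2)).
  { intro k. apply ex_series_le_nonneg with V; auto. intro n; split; [apply rpow_ge0 |].
    apply (le_row_sum (fun n k => rpow (y n k) 2)); auto using rpow_ge0. }
  assert (Hk : forall k, ex_series (fun n => Cmod (a n) * y n k) /\
     Series (fun n => Cmod (a n) * y n k) <= 2 * Lp 2 (fun n => Cmod (a n)) * Lp 2 (fun n => y n k)).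
  { intro k. rewrite <- H2 at 3. apply holder; auto using Cmod_ge_0; try lra. rewrite H2; auto. }
  assert (Ek : forall k, ex_series (fun n => y n k * Cmod (a n))).
  { intro k. eapply ex_series_ext; [| apply (Hk k)]. intro; simpl; ring. }
  destruct (tonelli (fun n k => rpow (y n k) 2) V) as [T1 T2]; auto using rpow_ge0.
  set (A := Series (fun n => rpow (Cmod (a n)) 2)).
  assert (A0 : 0 <= A) by (apply Series_nonneg; auto using rpow_ge0).
  assert (Bk : forall k, 0 <= rpow (Cmod (kernel_op y a k)) 2 <= 16 * A * Series (fun n => rpow (y n k) 2)).
  { intro k. split; [apply rpow_ge0 |].
    destruct (kernel_op_Cmod_le y k (fun n => H0 n k) a (Ek k)) as [_ [_ B]].
    destruct (Hk k) as [_ B2].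
    rewrite (Series_ext (fun n => y n k * Cmod (a n)) (fun n => Cmod (a n) * y n k)) in B by (intro; ring).
    set (L1 := Lp 2 (fun n => Cmod (a n))) in *. set (L2 := Lp 2 (fun n => y n k)) in *.
    assert (P1 : rpow L1 2 = A) by (apply rpow_Lp; auto; lra).
    assert (P2 : rpow L2 2 = Series (fun n => rpow (y n k) 2)) by (apply rpow_Lp; auto; lra).
    rewrite <- P1, <- P2, !rpow_2 by (apply Cmod_ge_0 || apply Lp_ge0).
    pose proof (Lp_ge0 2 (fun n => Cmod (a n))). pose proof (Lp_ge0 2 (fun n => y n k)).
    pose proof (Cmod_ge_0 (kernel_op y a k)).
    assert (Cmod (kernel_op y a k) <= 4 * L1 * L2) by lra.
    assert (0 <= L1 * L2) by nra. nra. }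
  destruct (ex_series_Series_le _ _ Bk (ex_series_Rmult_l (16 * A) _ T1)) as [EC SC].
  split; [| split]; auto.
  rewrite Series_scal_l in SC. nra.
Qed.

(** * A compactness criterion *)

Definition strict_incr (f : nat -> nat) := forall j, (f j < f (S j))%nat.

Lemma strict_incr_ge f : strict_incr f -> forall j, (j <= f j)%nat.
Proof. intros H j; induction j; [lia | specialize (H j); lia]. Qed.

Lemma strict_incr_lt f : strict_incr f -> forall i j, (i < j)%nat -> (f i < f j)%nat.
Proof. intros H i j Hij. induction Hij; [apply H | specialize (H m); lia]. Qed.

Lemma strict_incr_comp f g : strict_incr f -> strict_incr g -> strict_incr (fun x => f (g x)).
Proof. intros Hf Hg j. apply strict_incr_lt; auto. Qed.

Definition R_cv (v : nat -> R) (l : R) :=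
  forall eps, 0 < eps -> exists J, forall j, (J <= j)%nat -> Rabs (v j - l) < eps.

Definition C_cv (v : nat -> C) (l : C) :=
  forall eps, 0 < eps -> exists J, forall j, (J <= j)%nat -> Cmod (Cminus (v j) l) < eps.

Lemma R_cv_subseq v l f : R_cv v l -> strict_incr f -> R_cv (fun j => v (f j)) l.
Proof.
  intros H Hf eps He. destruct (H eps He) as [J HJ]. exists J. intros j Hj.
  apply HJ. pose proof (strict_incr_ge f Hf j); lia.
Qed.

Lemma bounded_R_cv_subseq (u : nat -> R) M : (forall j, Rabs (u j) <= M) ->
  exists f, strict_incr f /\ exists l, R_cv (fun j => u (f j)) l.
Proof.
  intros HM.
  destruct (Bolzano_Weierstrass u (fun c => -M <= c <= M) (compact_P3 (-M) M)) as [l Hl].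
  { intro n; specialize (HM n); apply Rabs_le_between in HM; lra. }
  assert (G : forall N k : nat, exists p, (N <= p)%nat /\ Rabs (u p - l) < / INR (S k)).
  { intros N k. assert (Hp : 0 < / INR (S k)) by (apply Rinv_0_lt_compat, lt_0_INR; lia).
    destruct (Hl (fun y => Rabs (y - l) < / INR (S k)) N) as [p [Hp1 Hp2]].
    - exists (mkposreal _ Hp). intros y Hy; exact Hy.
    - exists p; auto. }
  destruct (functional_choice
              (fun (Nk : nat * nat) p => (fst Nk <= p)%nat /\ Rabs (u p - l) < / INR (S (snd Nk))))
    as [g Hg]; [intros [N k]; apply G |].
  set (f := fix f j := match j with 0%nat => g (0, 0)%nat | S j' => g (S (f j'), S j') end).
  exists f. split.
  - intro j. simpl. destruct (Hg (S (f j), S j)); simpl in *; lia.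
  - exists l. intros eps He. destruct (archimed_cor1 eps He) as [J [HJ1 HJ2]].
    exists J. intros j Hj.
    assert (Hfj : Rabs (u (f j) - l) < / INR (S j)) by (destruct j; apply Hg).
    eapply Rlt_le_trans; [exact Hfj |]. eapply Rle_trans; [| left; exact HJ1].
    apply Rinv_le_contravar; [apply lt_0_INR; lia | apply le_INR; lia].
Qed.

Lemma bounded_C_cv_subseq (u : nat -> C) M : (forall j, Cmod (u j) <= M) ->
  exists f, strict_incr f /\ exists l, C_cv (fun j => u (f j)) l.
Proof.
  intros HM.
  destruct (bounded_R_cv_subseq (fun j => fst (u j)) M) as [f1 [If1 [l1 H1]]].
  { intro j; eapply Rle_trans; [apply re_le_Cmod | auto]. }
  destruct (bounded_R_cv_subseq (fun j => snd (u (f1 j))) M) as [f2 [If2 [l2 H2]]].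
  { intro j; eapply Rle_trans; [apply im_le_Cmod | auto]. }
  exists (fun j => f1 (f2 j)). split; [apply strict_incr_comp; auto |].
  exists (l1, l2). intros eps He.
  destruct (R_cv_subseq _ _ f2 H1 If2 (eps / 2)) as [J1 HJ1]; [lra |].
  destruct (H2 (eps / 2)) as [J2 HJ2]; [lra |].
  exists (Nat.max J1 J2). intros j Hj.
  eapply Rle_lt_trans; [apply Cmod_le_Rabs_plus |]. simpl.
  specialize (HJ1 j ltac:(lia)). specialize (HJ2 j ltac:(lia)). simpl in *. unfold Rminus in *. lra.
Qed.

Lemma C_cv_subseq_choice M : exists E : (nat -> C) -> (nat -> nat) * C,
  forall u, (forall j, Cmod (u j) <= M) ->
  strict_incr (fst (E u)) /\ C_cv (fun j => u (fst (E u) j)) (snd (E u)).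
Proof.
  apply (functional_choice (fun u (x : (nat -> nat) * C) => (forall j, Cmod (u j) <= M) ->
    strict_incr (fst x) /\ C_cv (fun j => u (fst x j)) (snd x))).
  intro u. destruct (classic (forall j, Cmod (u j) <= M)) as [B | B].
  - destruct (bounded_C_cv_subseq u M B) as [f [If [l Hl]]]. exists (f, l); auto.
  - exists ((fun x => x), RtoC 0). intro; contradiction.
Qed.

(** [diag_extraction E c k] extracts successively along coordinates [0, ..., k-1]. *)
Fixpoint diag_extraction (E : (nat -> C) -> (nat -> nat) * C) (c : nat -> nat -> C) (k : nat)
  : nat -> nat :=
  match k with
  | 0%nat => fun x => x
  | S k' => fun x => diag_extraction E c k' (fst (E (fun j => c (diag_extraction E c k' j) k')) x)
  end.

Lemma diagonal_subseq (c : nat -> nat -> C) M : (forall j n, Cmod (c j n) <= M) ->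
  exists f, strict_incr f /\ exists alpha : nat -> C, forall n, C_cv (fun j => c (f j) n) (alpha n).
Proof.
  intros HM. destruct (C_cv_subseq_choice M) as [E HE].
  set (P := diag_extraction E c).
  set (th := fun k => fst (E (fun j => c (P k j) k))).
  assert (Ith : forall k, strict_incr (th k)) by (intro k; apply (HE (fun j => c (P k j) k)); auto).
  assert (IP : forall k, strict_incr (P k)).
  { induction k; [intro j; unfold P; simpl; lia | apply (strict_incr_comp _ _ IHk (Ith k))]. }
  exists (fun j => P (S j) j). split.
  - intro j. change (P (S (S j)) (S j)) with (P (S j) (th (S j) (S j))).
    apply strict_incr_lt; auto. pose proof (strict_incr_ge _ (Ith (S j)) (S j)). lia.
  - exists (fun k => snd (E (fun j => c (P k j) k))). intro k.
    assert (Later : forall m x, exists i, (x <= i)%nat /\ P (S k + m)%nat x = P (S k) i).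
    { induction m; intro x.
      - exists x; split; auto. rewrite Nat.add_0_r; auto.
      - replace (S k + S m)%nat with (S (S k + m)) by lia.
        change (P (S (S k + m)) x) with (P (S k + m)%nat (th (S k + m)%nat x)).
        destruct (IHm (th (S k + m)%nat x)) as [i [Hi1 Hi2]]. exists i. split; auto.
        pose proof (strict_incr_ge _ (Ith (S k + m)%nat) x). lia. }
    intros eps He.
    destruct (proj2 (HE (fun j => c (P k j) k) (fun j => HM _ _)) eps He) as [J HJ].
    exists (Nat.max J k). intros j Hj.
    destruct (Later (j - k)%nat j) as [i [Hi1 Hi2]].
    replace (S j) with (S k + (j - k))%nat by lia. rewrite Hi2.
    change (P (S k) i) with (P k (th k i)).
    apply (HJ i). lia.
Qed.

Lemma rpow_continuous p x0 eps : 1 <= p -> 0 <= x0 -> 0 < eps ->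
  exists del, 0 < del /\
    forall x, 0 <= x -> Rabs (x - x0) < del -> Rabs (rpow x p - rpow x0 p) < eps.
Proof.
  intros Hp [Hx0 | <-] He.
  - assert (D : derivable_pt (fun x => Rpower x p) x0)
      by (exists (p * Rpower x0 (p - 1)); apply derivable_pt_lim_power; auto).
    destruct (derivable_continuous_pt _ _ D eps He) as [alp [Ha Hal]].
    exists (Rmin alp x0). split; [apply Rmin_glb_lt; auto |].
    intros x Hx Hd.
    assert (Hxp : 0 < x).
    { assert (Hlt : Rabs (x - x0) < x0) by (eapply Rlt_le_trans; [exact Hd | apply Rmin_r]).
      apply Rabs_def2 in Hlt. lra. }
    rewrite !rpow_Rpower by auto.
    destruct (Req_dec x x0) as [-> | E]; [rewrite Rminus_diag, Rabs_R0; auto |].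
    apply (Hal x). split; [split; [exact I | auto] |].
    simpl. unfold Rdist. eapply Rlt_le_trans; [exact Hd | apply Rmin_l].
  - exists (Rmin 1 eps). split; [apply Rmin_glb_lt; lra |].
    intros x Hx Hd. rewrite rpow_0, Rminus_0_r in *.
    rewrite Rabs_pos_eq in * by (auto; apply rpow_ge0).
    assert (x < 1) by (eapply Rlt_le_trans; [exact Hd | apply Rmin_l]).
    assert (x < eps) by (eapply Rlt_le_trans; [exact Hd | apply Rmin_r]).
    pose proof (rpow_le_self x p (conj Hx (Rlt_le _ _ H)) Hp). lra.
Qed.

(** Fatou's lemma for coordinatewise limits in [l^p]. *)
Lemma in_lp_C_cv_limit p (c : nat -> nat -> C) (alpha : nat -> C) B : 1 <= p ->
  (forall n, C_cv (fun j => c j n) (alpha n)) ->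
  (forall j, in_lp p (c j) /\ Series (fun n => rpow (Cmod (c j n)) p) <= B) ->
  in_lp p alpha /\ Series (fun n => rpow (Cmod (alpha n)) p) <= B.
Proof.
  intros Hp Hcv Hc. apply ex_series_bounded; [intro; apply rpow_ge0 |].
  intro N. apply Rnot_lt_le. intro Hlt.
  set (s := sum_n (fun n => rpow (Cmod (alpha n)) p) N) in *.
  assert (HN : 0 < INR (S N)) by (apply lt_0_INR; lia).
  set (eta := (s - B) / (2 * INR (S N))).
  assert (Heta : 0 < eta) by (unfold eta; apply Rdiv_lt_0_compat; lra).
  destruct (eventually_forall_le
    (fun n j => Rabs (rpow (Cmod (c j n)) p - rpow (Cmod (alpha n)) p) < eta) N) as [J HJ].
  { intros n Hn.
    destruct (rpow_continuous p (Cmod (alpha n)) eta Hp (Cmod_ge_0 _) Heta) as [del [Hd Hdel]].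
    destruct (Hcv n del Hd) as [J HJ]. exists J. intros j Hj. apply Hdel; [apply Cmod_ge_0 |].
    eapply Rle_lt_trans; [apply (norm_triangle_inv (V := C_NormedModule)) | apply HJ; auto]. }
  destruct (Hc J) as [HcJ HBJ].
  assert (Hsum : sum_n (fun n => rpow (Cmod (alpha n)) p + - eta) N
                 <= sum_n (fun n => rpow (Cmod (c J n)) p) N).
  { apply sum_n_le. intros n Hn. specialize (HJ J (le_n _) n Hn). apply Rabs_def2 in HJ. lra. }
  rewrite (sum_n_plus (G := R_AbelianMonoid)), sum_n_const in Hsum. fold s in Hsum.
  pose proof (sum_n_le_Series (fun n => rpow (Cmod (c J n)) p) N (fun _ => rpow_ge0 _ _) HcJ).
  assert (INR (S N) * eta = (s - B) / 2) by (unfold eta; field; lra).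
  change (s + INR (S N) * - eta <= sum_n (fun n => rpow (Cmod (c J n)) p) N) in Hsum.
  lra.
Qed.

Lemma in_lp_seq_sub p a b : 0 < p -> in_lp p a -> in_lp p b ->
  in_lp p (seq_sub a b) /\
  Series (fun n => rpow (Cmod (seq_sub a b n)) p) <=
    rpow 2 p * (Series (fun n => rpow (Cmod (a n)) p) + Series (fun n => rpow (Cmod (b n)) p)).
Proof.
  intros Hp Ha Hb.
  assert (Hpt : forall n, 0 <= rpow (Cmod (seq_sub a b n)) p
                  <= rpow 2 p * (rpow (Cmod (a n)) p + rpow (Cmod (b n)) p)).
  { intro n. split; [apply rpow_ge0 |].
    pose proof (Rmax_l (Cmod (a n)) (Cmod (b n))). pose proof (Rmax_r (Cmod (a n)) (Cmod (b n))).
    pose proof (Cmod_ge_0 (a n)).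
    set (m := Rmax (Cmod (a n)) (Cmod (b n))) in *.
    assert (Cmod (seq_sub a b n) <= 2 * m).
    { unfold seq_sub, Cminus. eapply Rle_trans; [apply Cmod_triangle |]. rewrite Cmod_opp. lra. }
    apply Rle_trans with (rpow (2 * m) p); [apply rpow_le_compat; auto using Cmod_ge_0 |].
    rewrite rpow_mult_distr by lra. apply Rmult_le_compat_l; [apply rpow_ge0 |].
    pose proof (rpow_ge0 (Cmod (a n)) p). pose proof (rpow_ge0 (Cmod (b n)) p).
    unfold m, Rmax; destruct (Rle_dec (Cmod (a n)) (Cmod (b n))); lra. }
  destruct (ex_series_Series_le _ _ Hpt (ex_series_Rmult_l _ _ (ex_series_Rplus _ _ Ha Hb)))
    as [E1 E2].
  split; auto. rewrite Series_scal_l, Series_plus in E2 by auto. auto.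
Qed.

Lemma compact_op_of_uniformly_small p q (T : seqC -> seqC) : 1 <= p ->
  (forall a, in_lp p a -> in_lp q (T a)) ->
  (forall a b, in_lp p a -> in_lp p b -> T (seq_sub a b) = seq_sub (T a) (T b)) ->
  (forall B eps, 0 < eps -> exists N del, 0 < del /\
     forall d, in_lp p d -> Series (fun n => rpow (Cmod (d n)) p) <= B ->
       (forall n, (n <= N)%nat -> Cmod (d n) <= del) -> lp_norm q (T d) <= eps) ->
  compact_op p q T.
Proof.
  intros Hp HT Hlin Hsmall a M Ha.
  assert (Hp0 : 0 < p) by lra.
  destruct (diagonal_subseq (fun j n => a j n) M) as [f [If [alpha Hal]]].
  { intros j n. destruct (Ha j). eapply Rle_trans; [apply Cmod_le_lp_norm | ]; eauto. }
  destruct (in_lp_C_cv_limit p (fun j n => a (f j) n) alpha (rpow M p)) as [Fa Fb]; auto.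
  { intro j. destruct (Ha (f j)); split; auto. apply Series_rpow_le_lp_norm; auto. }
  exists f, (T alpha). split; [exact If |]. split; [apply HT; auto |].
  apply is_lim_seq_Reals. intros eps He.
  destruct (Hsmall (rpow 2 p * (rpow M p + rpow M p)) (eps / 2)) as [N [del [Hdel Hsm]]]; [lra |].
  destruct (eventually_forall_le (fun n j => Cmod (seq_sub (a (f j)) alpha n) <= del) N) as [J HJ].
  { intros n Hn. destruct (Hal n del Hdel) as [J HJ]. exists J. intros j Hj. left. apply HJ; auto. }
  exists J. intros j Hj. unfold Rdist. rewrite Rminus_0_r.
  destruct (Ha (f j)) as [Haj HMj].
  rewrite <- Hlin, Rabs_pos_eq by (auto using lp_norm_ge0).
  destruct (in_lp_seq_sub p (a (f j)) alpha Hp0 Haj Fa) as [S1 S2].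
  eapply Rle_lt_trans; [apply Hsm; auto | lra].
  eapply Rle_trans; [exact S2 |]. apply Rmult_le_compat_l; [apply rpow_ge0 |].
  pose proof (Series_rpow_le_lp_norm p (a (f j)) M Hp0 Haj HMj). lra.
Qed.

(** * Kernel operators from [l^p] to [l^1] *)

Lemma is_series_rows_upto (g : R -> R) y (W : nat -> R) N : g 0 = 0 ->
  (forall n, is_series (fun k => g (y n k)) (W n)) ->
  forall n, is_series (fun k => g (rows_upto N y n k)) (seq_head N W n).
Proof.
  intros g0 HW n. unfold rows_upto, seq_head. destruct (Nat.leb n N); [apply HW |].
  rewrite g0. apply is_series_of_lim. eapply is_lim_seq_ext; [| apply is_lim_seq_const].
  intro m. rewrite sum_n_const. simpl; ring.
Qed.

Lemma is_series_rows_after (g : R -> R) y (W : nat -> R) N : g 0 = 0 ->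
  (forall n, is_series (fun k => g (y n k)) (W n)) ->
  forall n, is_series (fun k => g (rows_after N y n k)) (seq_tail N W n).
Proof.
  intros g0 HW n. unfold rows_after, seq_tail. destruct (Nat.leb n N); [| apply HW].
  rewrite g0. apply is_series_of_lim. eapply is_lim_seq_ext; [| apply is_lim_seq_const].
  intro m. rewrite sum_n_const. simpl; ring.
Qed.

Definition unit_seq (k : nat) : seqC := fun m => if Nat.eqb m k then RtoC 1 else RtoC 0.

Lemma sum_n_indicator k N :
  sum_n (fun m => if Nat.eqb m k then 1 else 0) N = if Nat.leb k N then 1 else 0.
Proof.
  induction N as [| N IH].
  - rewrite sum_O. destruct k; reflexivity.
  - rewrite sum_n_succ, IH. destruct (Nat.eqb (S N) k) eqn:E1.
    + apply Nat.eqb_eq in E1 as <-. rewrite Nat.leb_refl.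
      replace (Nat.leb (S N) N) with false by (symmetry; apply Nat.leb_gt; lia). lra.
    + apply Nat.eqb_neq in E1. destruct (Nat.leb k N) eqn:E2.
      * apply Nat.leb_le in E2.
        replace (Nat.leb k (S N)) with true by (symmetry; apply Nat.leb_le; lia). lra.
      * apply Nat.leb_gt in E2.
        replace (Nat.leb k (S N)) with false by (symmetry; apply Nat.leb_gt; lia). lra.
Qed.

Lemma unit_seq_l1 k : in_lp 1 (unit_seq k) /\ lp_norm 1 (unit_seq k) <= 1.
Proof.
  assert (Hc : forall m, Cmod (unit_seq k m) = if Nat.eqb m k then 1 else 0).
  { intro m; unfold unit_seq; destruct (Nat.eqb m k); [apply Cmod_1 | apply Cmod_0]. }
  destruct (ex_series_bounded (fun m => Cmod (unit_seq k m)) 1) as [E1 E2].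
  - intro; apply Cmod_ge_0.
  - intro N. rewrite (sum_n_ext _ _ N Hc), sum_n_indicator. destruct (Nat.leb k N); lra.
  - assert (H1 : in_lp 1 (unit_seq k)) by (apply in_lp_1; auto).
    split; auto. rewrite lp_norm_1; auto.
Qed.

Lemma sum_n_fst (z : nat -> C) N : fst (sum_n z N) = sum_n (fun n => fst (z n)) N.
Proof. induction N; [rewrite !sum_O; auto | rewrite !sum_Sn, <- IHN; reflexivity]. Qed.

Lemma sum_n_snd (z : nat -> C) N : snd (sum_n z N) = sum_n (fun n => snd (z n)) N.
Proof. induction N; [rewrite !sum_O; auto | rewrite !sum_Sn, <- IHN; reflexivity]. Qed.

Lemma sum_n_unit_seq (z : nat -> C) k N :
  sum_n (fun n => Cmult (z n) (unit_seq n k)) N = if Nat.leb k N then z k else RtoC 0.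
Proof.
  assert (Ec : forall n, Cmult (z n) (unit_seq n k) = if Nat.eqb n k then z k else RtoC 0).
  { intro n. unfold unit_seq. rewrite Nat.eqb_sym.
    destruct (Nat.eqb n k) eqn:Hnk; [apply Nat.eqb_eq in Hnk as -> |]; ring. }
  assert (Hf : forall f : C -> R, f (RtoC 0) = 0 ->
            sum_n (fun n => f (if Nat.eqb n k then z k else RtoC 0)) N
            = if Nat.leb k N then f (z k) else 0).
  { intros f f0. rewrite (sum_n_ext _ (fun n => f (z k) * (if Nat.eqb n k then 1 else 0))).
    - rewrite sum_n_Rmult_l, sum_n_indicator. destruct (Nat.leb k N); simpl; lra.
    - intro n. destruct (Nat.eqb n k); [symmetry; apply Rmult_1_r | rewrite f0; symmetry; apply Rmult_0_r]. }
  apply injective_projections; [rewrite sum_n_fst | rewrite sum_n_snd];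
    rewrite (sum_n_ext _ _ N (fun n => f_equal _ (Ec n))), Hf by reflexivity;
    destruct (Nat.leb k N); reflexivity.
Qed.

Lemma in_lp_of_in_lp_1 q b : 1 <= q -> in_lp 1 b -> in_lp q b /\ lp_norm q b <= lp_norm 1 b.
Proof.
  intros Hq Hb. pose proof Hb as Hb'. apply in_lp_1 in Hb'.
  set (s := Series (fun n => Cmod (b n))).
  assert (Hs : forall n, Cmod (b n) <= s)
    by (intro n; apply (term_le_Series (fun n => Cmod (b n))); auto using Cmod_ge_0).
  assert (Hpt : forall n, 0 <= rpow (Cmod (b n)) q <= Cmod (b n) * rpow s (q - 1)).
  { intro n. split; [apply rpow_ge0 |]. destruct (Cmod_ge_0 (b n)) as [Hx | Hx].
    - specialize (Hs n). replace q with (1 + (q - 1)) at 1 by ring.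
      rewrite rpow_plus, rpow_1 by lra. apply Rmult_le_compat_l; [lra |].
      rewrite !rpow_Rpower by lra. apply Rle_Rpower_l; lra.
    - rewrite <- Hx, rpow_0. lra. }
  assert (Ev : ex_series (fun n => Cmod (b n) * rpow s (q - 1))) by (apply ex_series_scal_r; auto).
  destruct (ex_series_Series_le _ _ Hpt Ev) as [E1 E2]. split; [exact E1 |].
  rewrite lp_norm_1 by auto. apply Lp_le; [lra | apply Series_nonneg; auto using Cmod_ge_0 |].
  eapply Rle_trans; [exact E2 |]. rewrite Series_scal_r. fold s.
  destruct (Rle_lt_dec s 0); [rewrite !rpow_le0 by auto; lra |].
  replace q with (1 + (q - 1)) at 2 by ring. rewrite rpow_plus, rpow_1 by lra. lra.
Qed.

Lemma compact_op_of_compact_op_l1 p q T : 1 <= q ->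
  (forall a, in_lp p a -> in_lp 1 (T a)) -> compact_op p 1 T -> compact_op p q T.
Proof.
  intros Hq HT Hc a M Ha. destruct (Hc a M Ha) as [f [b [If [Hb Hl]]]].
  exists f, b. split; auto. split; [apply in_lp_of_in_lp_1; auto |].
  apply is_lim_seq_le_le with (fun _ => 0) (fun j => lp_norm 1 (seq_sub (T (a (f j))) b)); auto.
  - intro j. split; [apply lp_norm_ge0 |]. apply in_lp_of_in_lp_1; auto.
    apply (in_lp_seq_sub 1); [lra | | auto]. apply HT, Ha.
  - apply is_lim_seq_const.
Qed.

Section LpToL1.

Variables (p : R) (y : nat -> nat -> R) (S : nat -> R).
Hypothesis p_gt1 : 1 < p.
Hypothesis y_ge0 : forall n k, 0 <= y n k.
Hypothesis row_sums : forall n, is_series (y n) (S n).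
Hypothesis S_in_lp' : ex_series (fun n => rpow (S n) (conj_exp p)).

Local Notation e := (conj_exp p).
Let e_gt1 : 1 < e. Proof. apply conj_exp_gt1; auto. Qed.
Let S_ge0 n : 0 <= S n.
Proof. eapply Rle_trans; [apply (y_ge0 n 0%nat) | apply le_row_sum; auto]. Qed.

Lemma weighted_sum_holder a : in_lp p a ->
  ex_series (fun n => Cmod (a n) * S n) /\
  Series (fun n => Cmod (a n) * S n) <= 2 * lp_norm p a * Lp e S.
Proof. intros Ha. apply holder; auto using Cmod_ge_0. Qed.

Lemma kernel_op_lp_l1 a : in_lp p a ->
  (forall k, ex_series (fun n => y n k * Cmod (a n))) /\ in_lp 1 (kernel_op y a) /\
  Series (fun k => Cmod (kernel_op y a k)) <= 2 * Series (fun n => Cmod (a n) * S n).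
Proof. intros Ha. apply kernel_op_l1; auto. apply weighted_sum_holder; auto. Qed.

Lemma kernel_op_lp_minus a b : in_lp p a -> in_lp p b ->
  kernel_op y (seq_sub a b) = seq_sub (kernel_op y a) (kernel_op y b).
Proof.
  intros Ha Hb. apply functional_extensionality; intro k.
  apply kernel_op_minus; auto; [apply kernel_op_lp_l1 | apply kernel_op_lp_l1]; auto.
Qed.

(** Splitting the weights [S] into head and tail: the head only sees finitely many
    coordinates of [d], the tail is small in [l^(p')]. *)
Lemma weighted_sum_split d N del : in_lp p d -> (forall n, (n <= N)%nat -> Cmod (d n) <= del) ->
  Series (fun n => Cmod (d n) * S n) <= del * sum_n S N + 2 * lp_norm p d * Lp e (seq_tail N S).
Proof.
  intros Hd Hdel.
  assert (Ehead : ex_series (fun n => Cmod (d n) * seq_head N S n)).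
  { apply ex_series_le_nonneg with (seq_head N (fun n => del * S n)); [| apply ex_series_seq_head].
    intro n. pose proof (Cmod_ge_0 (d n)). unfold seq_head. destruct (Nat.leb n N) eqn:E.
    - apply Nat.leb_le in E. specialize (Hdel n E). split; [apply Rmult_le_pos |]; auto.
      apply Rmult_le_compat_r; auto.
    - lra. }
  assert (Shead : Series (fun n => Cmod (d n) * seq_head N S n) <= del * sum_n S N).
  { rewrite <- sum_n_Rmult_l, <- (Series_seq_head (fun n => del * S n)).
    apply Series_le; [| apply ex_series_seq_head].
    intro n. pose proof (Cmod_ge_0 (d n)). unfold seq_head. destruct (Nat.leb n N) eqn:E.
    - apply Nat.leb_le in E. specialize (Hdel n E). split; [apply Rmult_le_pos |]; auto.
      apply Rmult_le_compat_r; auto.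
    - lra. }
  destruct (holder p (fun n => Cmod (d n)) (seq_tail N S) p_gt1 (fun n => Cmod_ge_0 _)
              (fun n => proj1 (seq_tail_le S N n S_ge0)) Hd) as [Etail Stail].
  { apply ex_series_le_nonneg with (fun n => rpow (S n) e); auto. intro n. split; [apply rpow_ge0 |].
    apply rpow_le_compat; [lra | apply seq_tail_le; auto]. }
  rewrite (Series_ext _ (fun n => Cmod (d n) * seq_head N S n + Cmod (d n) * seq_tail N S n)).
  - rewrite Series_plus by auto. rewrite lp_norm_Lp. lra.
  - intro n. unfold seq_head, seq_tail. destruct (Nat.leb n N); ring.
Qed.

Lemma kernel_op_compact_l1 : compact_op p 1 (kernel_op y).
Proof.
  apply compact_op_of_uniformly_small; [lra | apply kernel_op_lp_l1 | apply kernel_op_lp_minus |].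
  intros B eps Heps.
  set (c := rpow (Rabs B + 1) (/ p)).
  assert (Hc : 0 <= c) by apply rpow_ge0.
  set (eta := eps / (8 * (c + 1))).
  assert (Heta : 0 < eta) by (unfold eta; apply Rdiv_lt_0_compat; lra).
  destruct (proj1 (is_lim_seq_Reals _ _) (Series_seq_tail_lim0 _ S_in_lp') (rpow eta e))
    as [N HN]; [apply rpow_gt0; auto |].
  specialize (HN N (le_n _)). unfold Rdist in HN. rewrite Rminus_0_r in HN.
  assert (Htail : Lp e (seq_tail N S) <= eta).
  { apply Lp_le; [lra | lra |]. rewrite (Series_ext _ (seq_tail N (fun n => rpow (S n) e))).
    - pose proof (Rle_abs (Series (seq_tail N (fun n => rpow (S n) e)))). lra.
    - intro n. unfold seq_tail. destruct (Nat.leb n N); auto. apply rpow_0. }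
  assert (HSN : 0 <= sum_n S N) by (apply sum_n_nonneg; auto).
  exists N, (eps / (4 * (sum_n S N + 1))). split; [apply Rdiv_lt_0_compat; lra |].
  intros d Hd HdB Hdel.
  destruct (kernel_op_lp_l1 d Hd) as [_ [Hin HT]].
  assert (Hdp : lp_norm p d <= c).
  { apply rpow_le_compat; [apply Rinv_0_lt_compat; lra |].
    split; [apply Series_nonneg; auto using rpow_ge0 | pose proof (Rle_abs B); lra]. }
  pose proof (weighted_sum_split d N _ Hd Hdel) as Hsplit.
  rewrite lp_norm_1 by auto.
  assert (H1 : eps / (4 * (sum_n S N + 1)) * sum_n S N <= eps / 4).
  { apply Rmult_le_reg_r with (4 * (sum_n S N + 1)); [lra |].
    replace (eps / (4 * (sum_n S N + 1)) * sum_n S N * (4 * (sum_n S N + 1)))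
      with (eps * sum_n S N) by (field; lra). nra. }
  assert (H2 : 2 * lp_norm p d * Lp e (seq_tail N S) <= eps / 4).
  { pose proof (lp_norm_ge0 p d). pose proof (Lp_ge0 e (seq_tail N S)).
    apply Rle_trans with (2 * c * eta); [apply Rmult_le_compat; nra |].
    unfold eta. apply Rmult_le_reg_r with (8 * (c + 1)); [lra |].
    replace (2 * c * (eps / (8 * (c + 1))) * (8 * (c + 1))) with (2 * c * eps) by (field; lra).
    nra. }
  lra.
Qed.

(** The nuclear decomposition [T = sum_k (a |-> (T a)_k) e_k]. *)
Lemma kernel_op_nuclear_l1 : ex_series (fun k => Lp e (fun n => y n k)) -> nuclear p 1 (kernel_op y).
Proof.
  intros Hcols.
  exists (fun k a => kernel_op y a k), (fun k => 4 * Lp e (fun n => y n k)), unit_seq.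
  assert (Ecol : forall k, ex_series (fun n => rpow (y n k) e)).
  { intro k. apply ex_series_le_nonneg with (fun n => rpow (S n) e); auto. intro n.
    split; [apply rpow_ge0 |]. apply rpow_le_compat; [lra | split; auto using le_row_sum]. }
  split; [| split; [| split]].
  - intro k. split; [pose proof (Lp_ge0 e (fun n => y n k)); lra |].
    split; [intros a b Ha Hb; apply kernel_op_plus; auto; apply kernel_op_lp_l1; auto |].
    split; [intros z a Ha; apply kernel_op_scal; auto; apply kernel_op_lp_l1; auto |].
    intros a Ha.
    destruct (kernel_op_Cmod_le y k (fun n => y_ge0 n k) a (proj1 (kernel_op_lp_l1 a Ha) k))
      as [_ [_ B]].
    destruct (holder p (fun n => Cmod (a n)) (fun n => y n k) p_gt1 (fun n => Cmod_ge_0 _)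
                (fun n => y_ge0 n k) Ha (Ecol k)) as [_ HH].
    rewrite (Series_ext (fun n => y n k * Cmod (a n)) (fun n => Cmod (a n) * y n k)) in B
      by (intro; ring).
    rewrite lp_norm_Lp. lra.
  - intro n; apply unit_seq_l1.
  - apply ex_series_le_nonneg with (fun k => 4 * Lp e (fun n => y n k)); [| apply ex_series_Rmult_l; auto].
    intro k. destruct (unit_seq_l1 k) as [_ Hk]. pose proof (lp_norm_ge0 1 (unit_seq k)).
    pose proof (Lp_ge0 e (fun n => y n k)). split; [apply Rmult_le_pos; lra |].
    rewrite <- (Rmult_1_r (4 * Lp e (fun n => y n k))) at 2. apply Rmult_le_compat_l; lra.
  - intros a Ha. destruct (kernel_op_lp_l1 a Ha) as [_ [Tin _]]. apply in_lp_1 in Tin.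
    apply is_lim_seq_ext with (fun N => Series (seq_tail N (fun k => Cmod (kernel_op y a k))));
      [| apply Series_seq_tail_lim0; auto].
    intro N.
    assert (Ep : forall k, Cmod (seq_sub (kernel_op y a)
                   (fun k => sum_n (fun n => Cmult (kernel_op y a n) (unit_seq n k)) N) k)
                 = seq_tail N (fun k => Cmod (kernel_op y a k)) k).
    { intro k. unfold seq_sub, seq_tail. rewrite sum_n_unit_seq.
      destruct (Nat.leb k N); [replace (Cminus _ _) with (RtoC 0) by ring; apply Cmod_0 |].
      replace (Cminus _ _) with (kernel_op y a k) by ring; auto. }
    rewrite lp_norm_1.
    + symmetry; apply Series_ext; auto.
    + apply in_lp_1. eapply ex_series_ext; [| apply ex_series_seq_tail; exact Tin].
      intro k; rewrite Ep; auto.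
Qed.

End LpToL1.

(** * Hilbert–Schmidt kernel operators on [l^2] *)

Section OnL2.

Variables (y : nat -> nat -> R) (V : nat -> R).
Hypothesis y_ge0 : forall n k, 0 <= y n k.
Hypothesis row_sq_sums : forall n, is_series (fun k => rpow (y n k) 2) (V n).
Hypothesis V_summable : ex_series V.

Let V_ge0 n : 0 <= V n.
Proof.
  rewrite <- (is_series_unique _ _ (row_sq_sums n)).
  apply Series_nonneg; [intro; apply rpow_ge0 | exists (V n); auto].
Qed.

Lemma kernel_op_l2_minus a b : in_lp 2 a -> in_lp 2 b ->
  kernel_op y (seq_sub a b) = seq_sub (kernel_op y a) (kernel_op y b).
Proof.
  intros Ha Hb. apply functional_extensionality; intro k.
  apply kernel_op_minus; auto; [apply (kernel_op_l2 y V) | apply (kernel_op_l2 y V)]; auto.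
Qed.

Lemma rpow2_Cmod_le_sum (z : C) u v : 0 <= u -> 0 <= v -> Cmod z <= u + v ->
  rpow (Cmod z) 2 <= 2 * rpow u 2 + 2 * rpow v 2.
Proof.
  intros Hu Hv H. pose proof (Cmod_ge_0 z).
  rewrite !rpow_2 by auto.
  assert (Cmod z * Cmod z <= (u + v) * (u + v)) by (apply Rmult_le_compat; lra).
  pose proof (Rle_0_sqr (u - v)). unfold Rsqr in *. nra.
Qed.

(** The rows [n <= N] only see the first [N + 1] coordinates of [d]; the rows [n > N] have
    small Hilbert–Schmidt norm. *)
Lemma kernel_op_l2_split d N del : in_lp 2 d -> (forall n, (n <= N)%nat -> Cmod (d n) <= del) ->
  Series (fun k => rpow (Cmod (kernel_op y d k)) 2)
    <= 32 * (INR (S N) * rpow del 2) * sum_n V N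
       + 32 * Series (fun n => rpow (Cmod (d n)) 2) * Series (seq_tail N V).
Proof.
  intros Hd Hdel.
  set (dh := fun n => if Nat.leb n N then d n else RtoC 0).
  assert (Pdh : forall n, 0 <= rpow (Cmod (dh n)) 2 <= seq_head N (fun _ => rpow del 2) n).
  { intro n. split; [apply rpow_ge0 |]. unfold dh, seq_head. destruct (Nat.leb n N) eqn:E.
    - apply Nat.leb_le in E. apply rpow_le_compat; [lra |]. split; [apply Cmod_ge_0 | auto].
    - rewrite Cmod_0, rpow_0; lra. }
  destruct (ex_series_Series_le _ _ Pdh (ex_series_seq_head _ N)) as [Edh Sdh].
  rewrite Series_seq_head, sum_n_const in Sdh.
  destruct (kernel_op_l2 (rows_upto N y) (seq_head N V) dh (rows_upto_ge0 y N y_ge0)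
     (is_series_rows_upto (fun x => rpow x 2) y V N (rpow_0 2) row_sq_sums)
     (ex_series_seq_head V N) Edh) as [_ [Thead Bhead]].
  destruct (kernel_op_l2 (rows_after N y) (seq_tail N V) d (rows_after_ge0 y N y_ge0)
     (is_series_rows_after (fun x => rpow x 2) y V N (rpow_0 2) row_sq_sums)
     (ex_series_seq_tail V N V_summable) Hd) as [_ [Ttail Btail]].
  destruct (kernel_op_l2 y V d y_ge0 row_sq_sums V_summable Hd) as [Ek _].
  rewrite Series_seq_head in Bhead.
  assert (Ehead : forall k, kernel_op (rows_upto N y) d k = kernel_op (rows_upto N y) dh k).
  { intro k. unfold kernel_op. f_equal; apply Series_ext; intro n;
      unfold rows_upto, dh; destruct (Nat.leb n N); simpl; ring. }
  assert (Hpt : forall k, 0 <= rpow (Cmod (kernel_op y d k)) 2 <=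
      2 * rpow (Cmod (kernel_op (rows_upto N y) dh k)) 2
      + 2 * rpow (Cmod (kernel_op (rows_after N y) d k)) 2).
  { intro k. split; [apply rpow_ge0 |]. apply rpow2_Cmod_le_sum; try apply Cmod_ge_0.
    rewrite (kernel_op_rows_split y N d k), <- Ehead; auto. apply Cmod_triangle. }
  destruct (ex_series_Series_le _ _ Hpt
              (ex_series_Rplus _ _ (ex_series_Rmult_l _ _ Thead) (ex_series_Rmult_l _ _ Ttail)))
    as [_ SS].
  rewrite Series_plus, !Series_scal_l in SS by (apply ex_series_Rmult_l; auto).
  assert (0 <= sum_n V N) by (apply sum_n_nonneg; auto).
  assert (0 <= Series (seq_tail N V))
    by (apply Series_nonneg; [intro; apply seq_tail_le; auto | apply ex_series_seq_tail; auto]).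
  assert (16 * Series (fun n => rpow (Cmod (dh n)) 2) * sum_n V N
          <= 16 * (INR (S N) * rpow del 2) * sum_n V N) by (apply Rmult_le_compat_r; lra).
  lra.
Qed.

Lemma kernel_op_compact_l2 : compact_op 2 2 (kernel_op y).
Proof.
  apply compact_op_of_uniformly_small;
    [lra | intros a Ha; apply (kernel_op_l2 y V); auto | apply kernel_op_l2_minus |].
  intros B eps Heps.
  set (B' := Rabs B + 1).
  assert (HB' : 0 < B' /\ B <= B') by (unfold B'; pose proof (Rabs_pos B); pose proof (Rle_abs B); lra).
  set (eps2 := rpow eps 2).
  assert (Heps2 : 0 < eps2) by (apply rpow_gt0; auto).
  destruct (proj1 (is_lim_seq_Reals _ _) (Series_seq_tail_lim0 _ V_summable) (eps2 / (64 * B')))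
    as [N HN]; [apply Rdiv_lt_0_compat; lra |].
  specialize (HN N (le_n _)). unfold Rdist in HN. rewrite Rminus_0_r in HN.
  pose proof (Rle_abs (Series (seq_tail N V))).
  assert (HSN : 0 <= sum_n V N) by (apply sum_n_nonneg; auto).
  assert (HN1 : 0 < INR (S N)) by (apply lt_0_INR; lia).
  set (del2 := eps2 / (64 * INR (S N) * (sum_n V N + 1))).
  assert (Hdel2 : 0 < del2).
  { unfold del2; apply Rdiv_lt_0_compat; [lra | apply Rmult_lt_0_compat; lra]. }
  exists N, (rpow del2 (/ 2)). split; [apply rpow_gt0; auto |].
  intros d Hd HdB Hdel.
  apply Lp_le; [lra | lra |]. fold eps2.
  eapply Rle_trans; [apply (kernel_op_l2_split d N _ Hd Hdel) |].
  rewrite rpow_inv_rpow by lra.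
  assert (H1 : 32 * (INR (S N) * del2) * sum_n V N <= eps2 / 2).
  { unfold del2. replace (32 * (INR (S N) * (eps2 / (64 * INR (S N) * (sum_n V N + 1)))) * sum_n V N)
      with (eps2 / 2 * (sum_n V N / (sum_n V N + 1))) by (field; lra).
    assert (sum_n V N / (sum_n V N + 1) <= 1).
    { apply Rmult_le_reg_r with (sum_n V N + 1); [lra |]. unfold Rdiv.
      rewrite Rmult_assoc, Rinv_l by lra. lra. }
    nra. }
  assert (H2 : 32 * Series (fun n => rpow (Cmod (d n)) 2) * Series (seq_tail N V) <= eps2 / 2).
  { assert (Series (seq_tail N V) <= eps2 / (64 * B')) by lra.
    assert (0 <= Series (seq_tail N V))
      by (apply Series_nonneg; [intro; apply seq_tail_le; auto | apply ex_series_seq_tail; auto]).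
    assert (0 <= Series (fun n => rpow (Cmod (d n)) 2)) by (apply Series_nonneg; auto using rpow_ge0).
    apply Rle_trans with (32 * B' * (eps2 / (64 * B'))); [| right; field; lra].
    apply Rmult_le_compat; lra. }
  lra.
Qed.

Lemma kernel_op_sub_partial_rows a N : in_lp 2 a ->
  seq_sub (kernel_op y a) (fun k => sum_n (fun n => Cmult (a n) (RtoC (y n k))) N)
  = kernel_op (rows_after N y) a.
Proof.
  intros Ha. destruct (kernel_op_l2 y V a y_ge0 row_sq_sums V_summable Ha) as [Ek _].
  apply functional_extensionality; intro k.
  destruct (kernel_op_Cmod_le y k (fun n => y_ge0 n k) a (Ek k)) as [E1 [E2 _]].
  unfold seq_sub, kernel_op, Cminus, Cplus, Copp. rewrite sum_n_fst, sum_n_snd.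
  cbn [fst snd]. f_equal.
  - rewrite (sum_n_ext _ (fun n => y n k * fst (a n))) by (intro; simpl; ring).
    rewrite <- Rminus_def, <- Series_seq_tail by auto.
    apply Series_ext; intro n; unfold seq_tail, rows_after; destruct (Nat.leb n N); ring.
  - rewrite (sum_n_ext _ (fun n => y n k * snd (a n))) by (intro; simpl; ring).
    rewrite <- Rminus_def, <- Series_seq_tail by auto.
    apply Series_ext; intro n; unfold seq_tail, rows_after; destruct (Nat.leb n N); ring.
Qed.

(** The nuclear decomposition [T = sum_n (a |-> a_n) (y(n,k))_k]. *)
Lemma kernel_op_nuclear_l2 : ex_series (fun n => rpow (V n) (/ 2)) -> nuclear 2 2 (kernel_op y).
Proof.
  intros HsqrtV. exists (fun n a => a n), (fun _ => 1), (fun n k => RtoC (y n k)).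
  assert (Hyv : forall n k, rpow (Cmod (RtoC (y n k))) 2 = rpow (y n k) 2)
    by (intros; rewrite Cmod_R, Rabs_pos_eq; auto).
  split; [| split; [| split]].
  - intro n. split; [lra |]. split; [reflexivity |]. split; [reflexivity |].
    intros a Ha. rewrite Rmult_1_l. apply Cmod_le_lp_norm; auto; lra.
  - intro n. unfold in_lp. eapply ex_series_ext; [| exists (V n); apply row_sq_sums].
    intro k; simpl; rewrite Hyv; auto.
  - eapply ex_series_ext; [| exact HsqrtV]. intro n. rewrite Rmult_1_l. unfold lp_norm. f_equal.
    rewrite (Series_ext _ (fun k => rpow (y n k) 2)) by (intro; apply Hyv).
    symmetry; apply is_series_unique; auto.
  - intros a Ha. apply is_lim_seq_Reals. intros eps Heps.
    set (A := Series (fun n => rpow (Cmod (a n)) 2)).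
    assert (A0 : 0 <= A) by (apply Series_nonneg; auto using rpow_ge0).
    set (eps2 := rpow (eps / 2) 2).
    assert (Heps2 : 0 < eps2) by (apply rpow_gt0; lra).
    destruct (proj1 (is_lim_seq_Reals _ _) (Series_seq_tail_lim0 _ V_summable) (eps2 / (16 * (A + 1))))
      as [N0 HN0]; [apply Rdiv_lt_0_compat; lra |].
    exists N0. intros N HN. specialize (HN0 N HN). unfold Rdist in *. rewrite Rminus_0_r in *.
    rewrite kernel_op_sub_partial_rows, Rabs_pos_eq by (auto using lp_norm_ge0).
    apply Rle_lt_trans with (eps / 2); [| lra].
    destruct (kernel_op_l2 (rows_after N y) (seq_tail N V) a (rows_after_ge0 y N y_ge0)
       (is_series_rows_after (fun x => rpow x 2) y V N (rpow_0 2) row_sq_sums)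
       (ex_series_seq_tail V N V_summable) Ha) as [_ [_ Btail]].
    apply Lp_le; [lra | lra |]. fold A in Btail. fold eps2. eapply Rle_trans; [exact Btail |].
    pose proof (Rle_abs (Series (seq_tail N V))).
    assert (0 <= Series (seq_tail N V))
      by (apply Series_nonneg; [intro; apply seq_tail_le; auto | apply ex_series_seq_tail; auto]).
    apply Rle_trans with (16 * (A + 1) * (eps2 / (16 * (A + 1)))); [| right; field; lra].
    apply Rmult_le_compat; nra.
Qed.

End OnL2.

(** * Sequences with power decay *)

Definition tail_const (s : R) : R := Rpower 2 s / (s - 1).

Lemma tail_const_pos s : 1 < s -> 0 < tail_const s.
Proof. intros Hs. apply Rdiv_lt_0_compat; [apply Rpower_gt0 | lra]. Qed.

(** With [u = 1/(x+1)], Bernoulli's inequality [(1-u)^(1-s) >= 1 + (s-1)u] gives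
    [x^(1-s) - (x+1)^(1-s) >= (s-1) (x+1)^(-s)], and [x^(-s) <= 2^s (x+1)^(-s)]. *)
Lemma Rpower_le_telescope x s : 1 < s -> 1 <= x ->
  Rpower x (-s) <= tail_const s * (Rpower x (1 - s) - Rpower (x + 1) (1 - s)).
Proof.
  intros Hs Hx. set (y := x + 1). set (u := / y).
  assert (Hy : 0 < y) by (unfold y; lra).
  assert (Hu : 0 < u < 1).
  { unfold u; split; [apply Rinv_0_lt_compat; lra |].
    rewrite <- Rinv_1; apply Rinv_lt_contravar; unfold y; lra. }
  assert (Ex : x = y * (1 - u)) by (unfold u, y; field; lra).
  assert (Bern : Rpower (1 - u) (1 - s) >= 1 + (s - 1) * u).
  { assert (L : ln (1 - u) <= - u).
    { rewrite <- (ln_exp (- u)). apply ln_le; [lra |]. pose proof (exp_ineq1_le (- u)); lra. }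
    unfold Rpower. pose proof (exp_ineq1_le ((1 - s) * ln (1 - u))). nra. }
  assert (Py : Rpower y (1 - s) = y * Rpower y (- s)).
  { replace (1 - s) with (1 + - s) by ring. rewrite Rpower_plus, Rpower_1; auto. }
  assert (D : (s - 1) * Rpower y (- s) <= Rpower x (1 - s) - Rpower y (1 - s)).
  { rewrite Ex, <- Rpower_mult_distr by lra.
    assert (0 < Rpower y (1 - s)) by apply Rpower_gt0.
    replace ((s - 1) * Rpower y (- s)) with (Rpower y (1 - s) * ((s - 1) * u))
      by (rewrite Py; unfold u; field; lra).
    nra. }
  assert (Y2 : Rpower x (- s) <= Rpower 2 s * Rpower y (- s)).
  { assert (Hyx : Rpower y (- s) >= Rpower (2 * x) (- s)).
    { rewrite !Rpower_Ropp. apply Rle_ge, Rinv_le_contravar; [apply Rpower_gt0 |].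
      apply Rle_Rpower_l; unfold y; lra. }
    rewrite <- Rpower_mult_distr, (Rpower_Ropp 2) in Hyx by lra.
    pose proof (Rpower_gt0 2 s).
    assert (H2 : Rpower 2 s * (/ Rpower 2 s * Rpower x (- s)) <= Rpower 2 s * Rpower y (- s))
      by (apply Rmult_le_compat_l; lra).
    rewrite <- Rmult_assoc, Rinv_r, Rmult_1_l in H2 by lra. exact H2. }
  unfold tail_const. pose proof (Rpower_gt0 2 s).
  apply Rle_trans with (Rpower 2 s * Rpower y (- s)); auto.
  apply Rmult_le_reg_l with (s - 1); [lra |].
  replace ((s - 1) * (Rpower 2 s / (s - 1) * (Rpower x (1 - s) - Rpower y (1 - s))))
    with (Rpower 2 s * (Rpower x (1 - s) - Rpower y (1 - s))) by (field; lra).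
  nra.
Qed.

Section PowerDecay.

Variables (u : nat -> R) (C s : R) (N0 : nat).
Hypothesis s_gt1 : 1 < s.
Hypothesis N0_ge1 : (1 <= N0)%nat.
Hypothesis C_ge0 : 0 <= C.
Hypothesis u_ge0 : forall k, 0 <= u k.
Hypothesis u_decay : forall k, (N0 <= k)%nat -> u k <= C * Rpower (INR k) (- s).

Let tail_partial_le n m : (N0 <= n)%nat ->
  sum_n (fun j => u (n + j)%nat) m
    <= C * tail_const s * (Rpower (INR n) (1 - s) - Rpower (INR (S (n + m))) (1 - s)).
Proof.
  intros Hn.
  assert (Step : forall k, (N0 <= k)%nat ->
            u k <= C * tail_const s * (Rpower (INR k) (1 - s) - Rpower (INR (S k)) (1 - s))).
  { intros k Hk. eapply Rle_trans; [apply u_decay; auto |]. rewrite Rmult_assoc.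
    apply Rmult_le_compat_l; auto. rewrite S_INR. apply Rpower_le_telescope; auto.
    apply (le_INR 1); lia. }
  induction m.
  - rewrite sum_O, Nat.add_0_r. apply Step; auto.
  - rewrite sum_n_succ. specialize (Step (n + S m)%nat ltac:(lia)).
    replace (S (n + m)) with (n + S m)%nat in IHm by lia. lra.
Qed.

Let tail_bounded n : (N0 <= n)%nat ->
  ex_series (fun j => u (n + j)%nat) /\
  Series (fun j => u (n + j)%nat) <= C * tail_const s * Rpower (INR n) (1 - s).
Proof.
  intros Hn. apply ex_series_bounded; [intro; auto |]. intro m.
  eapply Rle_trans; [apply tail_partial_le; auto |].
  assert (0 <= C * tail_const s) by (apply Rmult_le_pos; auto; left; apply tail_const_pos; auto).
  pose proof (Rpower_gt0 (INR (S (n + m))) (1 - s)). nra.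
Qed.

Lemma ex_series_power_decay : ex_series u.
Proof. apply (ex_series_incr_n u N0), tail_bounded; auto. Qed.

Lemma Series_tail_le_power n : (N0 <= n)%nat ->
  Series (fun j => u (n + j)%nat) <= C * tail_const s * Rpower (INR n) (1 - s).
Proof. apply tail_bounded. Qed.

End PowerDecay.

Lemma rpow_le_power u x a b t : 0 <= u -> 0 <= a -> 0 < x -> 0 < t -> u <= a * Rpower x b ->
  rpow u t <= rpow a t * Rpower x (b * t).
Proof.
  intros Hu Ha Hx Ht H. eapply Rle_trans; [apply rpow_le_compat; [auto | split; [auto | exact H]] |].
  rewrite rpow_mult_distr by (auto; left; apply Rpower_gt0).
  rewrite (rpow_Rpower (Rpower x b)), Rpower_mult by apply Rpower_gt0. lra.
Qed.

(** * The kernels of [H_mu] and [C_mu] *)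

Definition hankel_kernel (mu : nat -> R) (n k : nat) : R := mu (n + k)%nat.

Definition cesaro_kernel (mu : nat -> R) (n k : nat) : R := if Nat.leb n k then mu k else 0.

Definition mu_tail (mu : nat -> R) (n : nat) : R := Series (fun j => mu (n + j)%nat).

Definition mu_sq_tail (mu : nat -> R) (n : nat) : R := Series (fun j => rpow (mu (n + j)%nat) 2).

Lemma Hmu_kernel mu : Hmu mu = kernel_op (hankel_kernel mu).
Proof. reflexivity. Qed.

Lemma Cmu_kernel mu : Cmu mu = kernel_op (cesaro_kernel mu).
Proof.
  apply functional_extensionality; intro a. apply functional_extensionality; intro k.
  unfold Cmu, kernel_op, cesaro_kernel.
  assert (E : forall f : C -> R, Series (fun n => (if Nat.leb n k then mu k else 0) * f (a n))
                                 = mu k * sum_n (fun n => f (a n)) k).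
  { intro f. rewrite (Series_ext _ (seq_head k (fun n => mu k * f (a n)))).
    - rewrite Series_seq_head, sum_n_Rmult_l; auto.
    - intro n; unfold seq_head; destruct (Nat.leb n k); ring. }
  rewrite !E, <- sum_n_fst, <- sum_n_snd. unfold Cmult, RtoC; simpl. f_equal; ring.
Qed.

Section DecayingWeights.

Variables (mu : nat -> R) (K r : R) (N1 : nat).
Hypothesis mu_pos : forall n, 0 < mu n.
Hypothesis r_gt1 : 1 < r.
Hypothesis N1_ge1 : (1 <= N1)%nat.
Hypothesis K_ge0 : 0 <= K.
Hypothesis mu_decay : forall k, (N1 <= k)%nat -> mu k <= K * Rpower (INR k) (- r).

Let mu_ge0 n : 0 <= mu n.
Proof. left; auto. Qed.

Let INR_pos k : (N1 <= k)%nat -> 0 < INR k.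
Proof. intros; apply lt_0_INR; lia. Qed.

Let rpow_mu_decay e k : 0 < e -> (N1 <= k)%nat ->
  rpow (mu k) e <= rpow K e * Rpower (INR k) (- (r * e)).
Proof.
  intros He Hk. replace (- (r * e)) with (- r * e) by ring. apply rpow_le_power; auto.
Qed.

Let rpow_mu_sq_decay k : (N1 <= k)%nat -> rpow (mu k) 2 <= rpow K 2 * Rpower (INR k) (- (2 * r)).
Proof. intros Hk. replace (2 * r) with (r * 2) by ring. apply rpow_mu_decay; auto; lra. Qed.

Lemma is_series_mu_tail n : is_series (fun j => mu (n + j)%nat) (mu_tail mu n).
Proof.
  apply Series_correct, (ex_series_incr_n mu n).
  apply (ex_series_power_decay mu K r N1); auto.
Qed.

Lemma is_series_mu_sq_tail n : is_series (fun j => rpow (mu (n + j)%nat) 2) (mu_sq_tail mu n).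
Proof.
  apply Series_correct, (ex_series_incr_n (fun j => rpow (mu j) 2) n).
  apply (ex_series_power_decay _ (rpow K 2) (2 * r) N1); auto using rpow_ge0; lra.
Qed.

Lemma hankel_kernel_rows n :
  is_series (hankel_kernel mu n) (mu_tail mu n) /\
  is_series (fun k => rpow (hankel_kernel mu n k) 2) (mu_sq_tail mu n).
Proof. split; [apply is_series_mu_tail | apply is_series_mu_sq_tail]. Qed.

Lemma cesaro_kernel_rows n :
  is_series (cesaro_kernel mu n) (mu_tail mu n) /\
  is_series (fun k => rpow (cesaro_kernel mu n k) 2) (mu_sq_tail mu n).
Proof.
  split; [apply is_series_zero_prefix, is_series_mu_tail |].
  eapply is_series_ext; [| apply (is_series_zero_prefix (fun k => rpow (mu k) 2)), is_series_mu_sq_tail].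
  intro k; unfold cesaro_kernel; destruct (Nat.leb n k); auto. symmetry; apply rpow_0.
Qed.

Lemma mu_tail_in_lp e : 0 < e -> 1 < e * (r - 1) -> ex_series (fun n => rpow (mu_tail mu n) e).
Proof.
  intros He Hre.
  assert (HC : 0 <= K * tail_const r) by (apply Rmult_le_pos; auto; left; apply tail_const_pos; auto).
  apply (ex_series_power_decay _ (rpow (K * tail_const r) e) (e * (r - 1)) N1);
    auto using rpow_ge0.
  intros k Hk. replace (- (e * (r - 1))) with ((1 - r) * e) by ring.
  apply rpow_le_power; auto.
  - apply Series_nonneg; [intro; auto | eexists; apply is_series_mu_tail].
  - apply (Series_tail_le_power mu K r N1); auto.
Qed.

Lemma mu_sq_tail_summable :
  ex_series (mu_sq_tail mu) /\ (3 / 2 < r -> ex_series (fun n => rpow (mu_sq_tail mu n) (/ 2))).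
Proof.
  assert (HC : 0 <= rpow K 2 * tail_const (2 * r))
    by (apply Rmult_le_pos; [apply rpow_ge0 | left; apply tail_const_pos; lra]).
  assert (V0 : forall n, 0 <= mu_sq_tail mu n)
    by (intro n; apply Series_nonneg; [intro; apply rpow_ge0 | eexists; apply is_series_mu_sq_tail]).
  assert (Vb : forall n, (N1 <= n)%nat ->
            mu_sq_tail mu n <= rpow K 2 * tail_const (2 * r) * Rpower (INR n) (- (2 * r - 1))).
  { intros n Hn. replace (- (2 * r - 1)) with (1 - 2 * r) by ring.
    apply (Series_tail_le_power (fun k => rpow (mu k) 2) (rpow K 2) (2 * r) N1); auto using rpow_ge0; lra. }
  split.
  - apply (ex_series_power_decay _ (rpow K 2 * tail_const (2 * r)) (2 * r - 1) N1); auto; lra.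
  - intro H32. apply (ex_series_power_decay _ (rpow (rpow K 2 * tail_const (2 * r)) (/ 2)) (r - / 2) N1);
      auto using rpow_ge0; [lra |].
    intros k Hk. replace (- (r - / 2)) with (- (2 * r - 1) * / 2) by field.
    apply rpow_le_power; auto. lra.
Qed.

Section Columns.

Variables (e : R) (col : nat -> nat -> R) (Ce : R).
Hypothesis e_pos : 0 < e.
Hypothesis e_large : 1 < e * (r - 1).
Hypothesis Ce_ge0 : 0 <= Ce.
Hypothesis col_in_lp : forall k, ex_series (fun n => rpow (col k n) e).
Hypothesis col_decay : forall k, (N1 <= k)%nat ->
  Series (fun n => rpow (col k n) e) <= Ce * Rpower (INR k) (1 - r * e).

Lemma ex_series_Lp_columns : ex_series (fun k => Lp e (col k)).
Proof.
  assert (1 < r - / e).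
  { replace (r - / e) with (1 + (e * (r - 1) - 1) / e) by (field; lra).
    assert (0 < (e * (r - 1) - 1) / e) by (apply Rdiv_lt_0_compat; lra). lra. }
  apply (ex_series_power_decay _ (rpow Ce (/ e)) (r - / e) N1); auto using rpow_ge0, Lp_ge0.
  intros k Hk. unfold Lp. replace (- (r - / e)) with ((1 - r * e) * / e) by (field; lra).
  apply rpow_le_power; auto using Rinv_0_lt_compat.
  apply Series_nonneg; auto using rpow_ge0.
Qed.

End Columns.

Lemma hankel_columns_in_lp e : 0 < e -> 1 < e * (r - 1) ->
  ex_series (fun k => Lp e (fun n => hankel_kernel mu n k)).
Proof.
  intros He Hre.
  assert (T : forall k, (N1 <= k)%nat -> Series (fun j => rpow (mu (k + j)%nat) e)
                 <= rpow K e * tail_const (r * e) * Rpower (INR k) (1 - r * e)).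
  { intros k Hk.
    apply (Series_tail_le_power (fun k => rpow (mu k) e) (rpow K e) (r * e) N1); auto using rpow_ge0.
    nra. }
  assert (Hcol : forall k, (fun n => rpow (hankel_kernel mu n k) e)
                           = (fun j => rpow (mu (k + j)%nat) e)).
  { intros k; apply functional_extensionality; intro n.
    unfold hankel_kernel; rewrite Nat.add_comm; auto. }
  apply (ex_series_Lp_columns e (fun k n => hankel_kernel mu n k) (rpow K e * tail_const (r * e)));
    auto.
  - apply Rmult_le_pos; [apply rpow_ge0 | left; apply tail_const_pos; nra].
  - intro k. rewrite Hcol. apply (ex_series_incr_n (fun j => rpow (mu j) e) k).
    apply (ex_series_power_decay _ (rpow K e) (r * e) N1); auto using rpow_ge0; nra.
  - intros k Hk. rewrite Hcol. apply T; auto.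
Qed.

Lemma cesaro_columns_in_lp e : 0 < e -> 1 < e * (r - 1) ->
  ex_series (fun k => Lp e (fun n => cesaro_kernel mu n k)).
Proof.
  intros He Hre.
  assert (Hcol : forall k, (fun n => rpow (cesaro_kernel mu n k) e) = seq_head k (fun _ => rpow (mu k) e)).
  { intros k; apply functional_extensionality; intro n. unfold cesaro_kernel, seq_head.
    destruct (Nat.leb n k); auto. apply rpow_0. }
  apply (ex_series_Lp_columns e (fun k n => cesaro_kernel mu n k) (2 * rpow K e)); auto.
  - pose proof (rpow_ge0 K e); lra.
  - intro k. rewrite Hcol. apply ex_series_seq_head.
  - intros k Hk. rewrite Hcol, Series_seq_head, sum_n_const.
    pose proof (rpow_mu_decay e k He Hk). pose proof (rpow_ge0 (mu k) e). pose proof (rpow_ge0 K e).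
    assert (Hk1 : 1 <= INR k) by (apply (le_INR 1); lia).
    assert (INR (S k) <= 2 * INR k) by (rewrite S_INR; lra).
    assert (Ek : INR k * Rpower (INR k) (- (r * e)) = Rpower (INR k) (1 - r * e)).
    { replace (1 - r * e) with (1 + - (r * e)) by ring. rewrite Rpower_plus, Rpower_1; lra. }
    pose proof (Rpower_gt0 (INR k) (- (r * e))).
    apply Rle_trans with (2 * INR k * (rpow K e * Rpower (INR k) (- (r * e)))).
    + apply Rmult_le_compat; try lra. apply pos_INR.
    + rewrite <- Ek. lra.
Qed.

End DecayingWeights.

Lemma conj_exp_mul_gt1 p r : 1 < p < r -> 0 < conj_exp p /\ 1 < conj_exp p * (r - 1).
Proof.
  intros [Hp1 Hp2]. unfold conj_exp. split; [apply Rdiv_lt_0_compat; lra |].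
  replace (p / (p - 1) * (r - 1)) with (1 + (p * r - 2 * p + 1) / (p - 1)) by (field; lra).
  assert (0 < (p * r - 2 * p + 1) / (p - 1)) by (apply Rdiv_lt_0_compat; nra). lra.
Qed.

Lemma kernel_op_compact_nuclear y S V r : 1 < r -> (forall n k, 0 <= y n k) ->
  (forall n, is_series (y n) (S n)) -> (forall n, is_series (fun k => rpow (y n k) 2) (V n)) ->
  (forall e, 0 < e -> 1 < e * (r - 1) ->
     ex_series (fun n => rpow (S n) e) /\ ex_series (fun k => Lp e (fun n => y n k))) ->
  ex_series V -> (3 / 2 < r -> ex_series (fun n => rpow (V n) (/ 2))) ->
  (forall q p, 1 <= q -> 1 < p < r ->
     (forall a, in_lp p a -> in_lp q (kernel_op y a)) /\
     (q = 1 -> nuclear p q (kernel_op y)) /\ (1 < q -> compact_op p q (kernel_op y))) /\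
  (forall a, in_lp 2 a -> in_lp 2 (kernel_op y a)) /\ compact_op 2 2 (kernel_op y) /\
  (3 / 2 < r -> nuclear 2 2 (kernel_op y)).
Proof.
  intros Hr Hy HS HV Hcols EV HsqrtV. split; [| split; [| split]].
  - intros q p Hq Hp.
    destruct (conj_exp_mul_gt1 p r Hp) as [He Hre]. destruct (Hcols _ He Hre) as [ES EC].
    assert (Hp1 : 1 < p) by apply Hp.
    split; [| split].
    + intros a Ha. apply in_lp_of_in_lp_1; auto. apply (kernel_op_lp_l1 p y S); auto.
    + intros ->. apply kernel_op_nuclear_l1 with S; auto.
    + intros Hq1. apply compact_op_of_compact_op_l1; [lra | | apply kernel_op_compact_l1 with S; auto].
      intros a Ha; apply (kernel_op_lp_l1 p y S); auto.
  - intros a Ha; apply (kernel_op_l2 y V); auto.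
  - apply kernel_op_compact_l2 with V; auto.
  - intros H32. apply kernel_op_nuclear_l2 with V; auto.
Qed.

Lemma power_decay_of_big_O (mu : nat -> R) r K N : (forall n, 0 < mu n) ->
  (forall n, (N <= n)%nat -> (0 < n)%nat -> mu n <= K / Rpower (INR n) r) ->
  0 <= K /\ forall k, (Nat.max N 1 <= k)%nat -> mu k <= K * Rpower (INR k) (- r).
Proof.
  intros Hpos HK.
  assert (Hd : forall k, (Nat.max N 1 <= k)%nat -> mu k <= K * Rpower (INR k) (- r)).
  { intros k Hk. rewrite Rpower_Ropp. apply HK; lia. }
  split; auto.
  pose proof (Hd _ (le_n _)). pose proof (Hpos (Nat.max N 1)).
  pose proof (Rpower_gt0 (INR (Nat.max N 1)) (- r)). nra.
Qed.

Theorem proposition32 (mu : nat -> R) (r : R) :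
  (forall n, 0 < mu n) ->
  (forall n, mu (S n) <= mu n) ->
  1 < r ->
  (exists (K : R) (N : nat), forall n, (N <= n)%nat -> (0 < n)%nat ->
      mu n <= K / Rpower (INR n) r) ->
  (forall q, 1 <= q ->
     exists p0, 1 < p0 /\
       forall p, 1 < p < p0 ->
         (forall a, in_lp p a -> in_lp q (Hmu mu a)) /\
         (forall a, in_lp p a -> in_lp q (Cmu mu a)) /\
         (q = 1 -> nuclear p q (Hmu mu) /\ nuclear p q (Cmu mu)) /\
         (1 < q -> compact_op p q (Hmu mu) /\ compact_op p q (Cmu mu))) /\
  (forall a, in_lp 2 a -> in_lp 2 (Hmu mu a)) /\
  (forall a, in_lp 2 a -> in_lp 2 (Cmu mu a)) /\
  compact_op 2 2 (Hmu mu) /\ compact_op 2 2 (Cmu mu) /\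
  (3 / 2 < r -> nuclear 2 2 (Hmu mu) /\ nuclear 2 2 (Cmu mu)).
Proof.
  intros Hpos _ Hr [K [N HK]].
  destruct (power_decay_of_big_O mu r K N Hpos HK) as [HK0 Hdecay].
  assert (HN1 : (1 <= Nat.max N 1)%nat) by lia.
  pose proof (mu_tail_in_lp mu K r _ Hpos Hr HN1 HK0 Hdecay) as HS.
  destruct (mu_sq_tail_summable mu K r _ Hpos Hr HN1 HK0 Hdecay) as [EV EsqrtV].
  pose proof (hankel_kernel_rows mu K r _ Hpos Hr HN1 HK0 Hdecay) as RH.
  pose proof (cesaro_kernel_rows mu K r _ Hpos Hr HN1 HK0 Hdecay) as RC.
  destruct (kernel_op_compact_nuclear (hankel_kernel mu) (mu_tail mu) (mu_sq_tail mu) r Hr)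
    as [LpH [L2H [CH NH]]];
    [intros n k; left; apply Hpos | apply RH | apply RH | | exact EV | exact EsqrtV |].
  { intros e He Hre; split; [apply HS | apply (hankel_columns_in_lp mu K r _ Hpos HN1 HK0 Hdecay)]; auto. }
  destruct (kernel_op_compact_nuclear (cesaro_kernel mu) (mu_tail mu) (mu_sq_tail mu) r Hr)
    as [LpC [L2C [CC NC]]]; [| apply RC | apply RC | | exact EV | exact EsqrtV |].
  { intros n k; unfold cesaro_kernel; destruct (Nat.leb n k); [left; apply Hpos | lra]. }
  { intros e He Hre; split; [apply HS | apply (cesaro_columns_in_lp mu K r _ Hpos HN1 HK0 Hdecay)]; auto. }
  rewrite Hmu_kernel, Cmu_kernel.
  split; [| split; [| split; [| split; [| split]]]]; auto.
  - intros q Hq. exists r. split; auto. intros p Hp.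
    destruct (LpH q p Hq Hp) as [A1 [A2 A3]], (LpC q p Hq Hp) as [B1 [B2 B3]].
    split; [| split; [| split]]; auto.
Qed.
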